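(* Let $\beta=(\beta_n)_{n\ge0}$ be a sequence of positive numbers with $\liminf_n\beta_n^{1/n}\ge1$. Then $\mathcal M(H^2(\beta))=H^\infty$ with equivalent norms (i.e. the two sets coincide and there is $C>0$ with $\|h\|_\infty\le\|M_h\|\le C\|h\|_\infty$ for all $h\in H^\infty$) if and only if $\beta$ is essentially decreasing.
   Context: $H^2(\beta)$ is the Hilbert space of analytic functions $f(z)=\sum_{n\ge0}a_nz^n$ on the unit disk $\mathbb D$ with $\|f\|^2=\sum_{n\ge0}|a_n|^2\beta_n<\infty$. $\mathcal M(H^2(\beta))$ is the space of analytic $h$ on $\mathbb D$ with $hf\in H^2(\beta)$ for all $f\in H^2(\beta)$, normed by the operator norm of the multiplication operator $M_hf=hf$; one always has $\|h\|_\infty\le\|M_h\|$. $H^\infty$ is the space of bounded analytic functions on $\mathbb D$ with the sup norm. $\beta$ is essentially decreasing if there is $C\ge1$ with $\beta_m\le C\beta_n$ for all $m\ge n\ge0$. *)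

From Stdlib Require Import Reals.
From Coquelicot Require Import Coquelicot.
Open Scope R_scope.

(* An analytic function on the unit disk is represented by its Taylor
   coefficient sequence a : nat -> C, with f(z) = sum_n a_n z^n converging
   for every |z| < 1. *)
Definition analytic_disk (a : nat -> C) : Prop :=
  forall z : C, Cmod z < 1 -> ex_series (fun n => (a n * z ^ n)%C).

Definition in_H2 (beta : nat -> R) (a : nat -> C) : Prop :=
  ex_series (fun n => Cmod (a n) ^ 2 * beta n).

Definition H2_norm (beta : nat -> R) (a : nat -> C) : R :=
  sqrt (Series (fun n => Cmod (a n) ^ 2 * beta n)).

(* Taylor coefficients of the product of two analytic functions
   (Cauchy product). *)
Definition cauchy_prod (a b : nat -> C) : nat -> C :=
  fun n => sum_n (fun k => (a k * b (n - k)%nat)%C) n.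

Definition is_multiplier (beta : nat -> R) (h : nat -> C) : Prop :=
  analytic_disk h /\
  forall f, in_H2 beta f -> in_H2 beta (cauchy_prod h f).

Definition mult_norm (beta : nat -> R) (h : nat -> C) : Rbar :=
  Lub_Rbar (fun x => exists f, in_H2 beta f /\ H2_norm beta f <= 1 /\
                               x = H2_norm beta (cauchy_prod h f)).

Definition value_at (h : nat -> C) (z l : C) : Prop :=
  is_series (fun n => (h n * z ^ n)%C) l.

Definition in_Hinf (h : nat -> C) : Prop :=
  analytic_disk h /\
  exists M : R, forall z l, Cmod z < 1 -> value_at h z l -> Cmod l <= M.

Definition sup_norm (h : nat -> C) : Rbar :=
  Lub_Rbar (fun x => exists z l, Cmod z < 1 /\ value_at h z l /\ x = Cmod l).

Definition ess_decreasing (beta : nat -> R) : Prop :=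
  exists C : R, 1 <= C /\ forall m n : nat, (n <= m)%nat -> beta m <= C * beta n.

From Stdlib Require Import Reals Arith Lra Lia Psatz FunctionalExtensionality ClassicalEpsilon Classical.
From Coquelicot Require Import Coquelicot.
Open Scope R_scope.

(* (=>) The monomial z^d has sup norm at most 1; applying the norm equivalence
   to it and to the unit vector e_n / sqrt(beta_n) gives beta_(n+d) <= C^2 beta_n.

   (<=) Let beta_m <= C0 beta_n for all m >= n.
   - H^oo is contained in M(H^2(beta)) with ||M_h|| <= sqrt C0 ||h||_oo.  The
     unweighted truncated estimate sum_(n<=k) |(hf)_n|^2 <= ||h||_oo^2 sum_(n<=k) |f_n|^2
     follows from the discrete Parseval identity at the N-th roots of unity on
     the circle of radius r < 1, letting N -> oo and then r -> 1.  Abel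
     summation against the nonincreasing minorant min_(i<=n) beta_i >= beta_n / C0
     transfers it to the weight beta.
   - M(H^2(beta)) is contained in H^oo with ||h||_oo <= ||M_h||.  Every multiplier
     is a bounded operator (a gliding hump argument replaces the closed graph
     theorem), and testing a bounded multiplier on the reproducing kernel k_z,
     which lies in H^2(beta) thanks to the liminf hypothesis, bounds |h(z)|. *)

Lemma is_series_finite {K : AbsRing} {V : NormedModule K} (a : nat -> V) N :
  (forall k, (N < k)%nat -> a k = zero) -> is_series a (sum_n a N).
Proof.
  intros H. apply filterlim_ext_loc with (fun _ => sum_n a N).
  - exists N. intros n Hn. induction Hn; [reflexivity|].
    rewrite sum_Sn, H by lia. rewrite plus_zero_r. auto.
  - apply filterlim_const.
Qed.

Lemma sum_n_zero {G : AbelianMonoid} (a : nat -> G) N :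
  (forall k, (k <= N)%nat -> a k = zero) -> sum_n a N = zero.
Proof.
  induction N; intros H.
  - rewrite sum_O; apply H; lia.
  - rewrite sum_Sn, IHN, H by (intros; apply H; lia) || lia. apply plus_zero_l.
Qed.

Lemma sum_n_single {G : AbelianMonoid} (a : nat -> G) j N :
  (forall k, k <> j -> a k = zero) -> (j <= N)%nat -> sum_n a N = a j.
Proof.
  intros H HjN. induction HjN.
  - destruct j; [apply sum_O|].
    rewrite sum_Sn, sum_n_zero by (intros k Hk; apply H; lia). apply plus_zero_l.
  - rewrite sum_Sn, IHHjN, (H (S m)) by lia. apply plus_zero_r.
Qed.

Lemma is_series_single {K : AbsRing} {V : NormedModule K} (a : nat -> V) j :
  (forall k, k <> j -> a k = zero) -> is_series a (a j).
Proof.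
  intros H. rewrite <- (sum_n_single a j j H) by lia.
  apply is_series_finite. intros k Hk; apply H; lia.
Qed.

Lemma ex_series_finite_R (a : nat -> R) k : (forall n, (k < n)%nat -> a n = 0) -> ex_series a.
Proof. intros H. exists (sum_n a k). apply (is_series_finite (V := R_NormedModule)). exact H. Qed.

Lemma Re_sum_n (a : nat -> C) n : Re (sum_n a n) = sum_n (fun k => Re (a k)) n.
Proof. induction n; [rewrite !sum_O; auto|]. rewrite !sum_Sn, <- IHn. reflexivity. Qed.

Lemma Im_sum_n (a : nat -> C) n : Im (sum_n a n) = sum_n (fun k => Im (a k)) n.
Proof. induction n; [rewrite !sum_O; auto|]. rewrite !sum_Sn, <- IHn. reflexivity. Qed.

Lemma is_series_C_of_parts (a : nat -> C) lr li :
  is_series (fun n => Re (a n)) lr -> is_series (fun n => Im (a n)) li -> is_series a (lr, li).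
Proof.
  unfold is_series. intros H1 H2. apply filterlim_locally. intros eps.
  destruct (proj1 (filterlim_locally _ _) H1 eps) as [N1 H1'].
  destruct (proj1 (filterlim_locally _ _) H2 eps) as [N2 H2'].
  exists (max N1 N2). intros n Hn. split; simpl.
  - pose proof (H1' n ltac:(lia)) as Hb. rewrite <- Re_sum_n in Hb. exact Hb.
  - pose proof (H2' n ltac:(lia)) as Hb. rewrite <- Im_sum_n in Hb. exact Hb.
Qed.

Lemma is_series_C_Re (a : nat -> C) l :
  is_series a l -> is_series (fun n => Re (a n)) (Re l).
Proof.
  intros H. apply filterlim_locally. intros eps.
  destruct (proj1 (filterlim_locally _ _) H eps) as [N H']. exists N. intros n Hn.
  rewrite <- Re_sum_n. apply (H' n Hn).
Qed.

Lemma is_series_C_Im (a : nat -> C) l :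
  is_series a l -> is_series (fun n => Im (a n)) (Im l).
Proof.
  intros H. apply filterlim_locally. intros eps.
  destruct (proj1 (filterlim_locally _ _) H eps) as [N H']. exists N. intros n Hn.
  rewrite <- Im_sum_n. apply (H' n Hn).
Qed.

Lemma is_series_C_unique (a : nat -> C) l1 l2 : is_series a l1 -> is_series a l2 -> l1 = l2.
Proof. intros H1 H2. exact (filterlim_locally_unique _ _ _ H1 H2). Qed.

Lemma is_series_RtoC (a : nat -> R) l : is_series a l -> is_series (fun n => RtoC (a n)) (RtoC l).
Proof.
  intros H. apply is_series_C_of_parts; [exact H|]. simpl.
  pose proof (is_series_finite (V := R_NormedModule) (fun _ : nat => 0) 0 (fun _ _ => eq_refl)) as Z.
  rewrite sum_O in Z. exact Z.
Qed.

Lemma Im_le_Cmod (c : C) : Rabs (Im c) <= Cmod c.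
Proof.
  destruct c as [x y]. unfold Cmod; simpl.
  rewrite <- sqrt_Rsqr_abs. apply sqrt_le_1_alt. unfold Rsqr. nra.
Qed.

(* Reduced to the real case
   (Coquelicot's is_series_mult) on the four products of parts. *)
Lemma is_series_Cmult (a b : nat -> C) la lb :
  is_series a la -> is_series b lb ->
  ex_series (fun n => Cmod (a n)) -> ex_series (fun n => Cmod (b n)) ->
  is_series (fun n => sum_n (fun k => (a k * b (n - k)%nat)%C) n) (la * lb)%C.
Proof.
  intros Ha Hb Aa Ab.
  assert (Habs : forall (u : nat -> C) (p : C -> R), (forall c, Rabs (p c) <= Cmod c) ->
            ex_series (fun n => Cmod (u n)) -> ex_series (fun n => Rabs (p (u n)))).
  { intros u p Hp Hu. apply (ex_series_le (V := R_CompleteNormedModule) _ (fun n => Cmod (u n))); [intros n|exact Hu].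
    unfold norm; simpl; unfold abs; simpl. rewrite Rabs_Rabsolu. apply Hp. }
  pose proof (is_series_C_Re _ _ Ha) as Ra. pose proof (is_series_C_Im _ _ Ha) as Ia.
  pose proof (is_series_C_Re _ _ Hb) as Rb. pose proof (is_series_C_Im _ _ Hb) as Ib.
  pose proof (Habs a Re re_le_Cmod Aa) as ARa. pose proof (Habs a Im Im_le_Cmod Aa) as AIa.
  pose proof (Habs b Re re_le_Cmod Ab) as ARb. pose proof (Habs b Im Im_le_Cmod Ab) as AIb.
  pose proof (is_series_mult _ _ _ _ Ra Rb ARa ARb) as P1.
  pose proof (is_series_mult _ _ _ _ Ia Ib AIa AIb) as P2.
  pose proof (is_series_mult _ _ _ _ Ra Ib ARa AIb) as P3.
  pose proof (is_series_mult _ _ _ _ Ia Rb AIa ARb) as P4.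
  replace (la * lb)%C with (Re la * Re lb - Im la * Im lb, Re la * Im lb + Im la * Re lb)
    by (destruct la, lb; reflexivity).
  apply is_series_C_of_parts.
  - replace (Re la * Re lb - Im la * Im lb)
      with (plus (Re la * Re lb) (scal (-1) (Im la * Im lb)))
      by (unfold plus, scal; simpl; unfold mult; simpl; ring).
    apply is_series_ext with (fun n => plus (sum_f_R0 (fun k => Re (a k) * Re (b (n - k)%nat)) n)
        (scal (-1) (sum_f_R0 (fun k => Im (a k) * Im (b (n - k)%nat)) n))).
    + intros n. rewrite Re_sum_n, sum_n_Reals.
      transitivity (sum_f_R0 (fun i => Re (a i) * Re (b (n-i)%nat) - Im (a i) * Im (b (n-i)%nat)) n).
      * rewrite minus_sum. unfold plus, scal; simpl; unfold mult; simpl; ring.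
      * apply sum_eq. intros i _. destruct (a i), (b (n - i)%nat); simpl. ring.
    + apply (is_series_plus _ _ _ _ P1 (is_series_scal_l (-1) _ _ P2)).
  - apply is_series_ext with (fun n => plus (sum_f_R0 (fun k => Re (a k) * Im (b (n - k)%nat)) n)
        (sum_f_R0 (fun k => Im (a k) * Re (b (n - k)%nat)) n)).
    + intros n. rewrite Im_sum_n, sum_n_Reals. unfold plus; simpl. rewrite <- plus_sum.
      apply sum_eq. intros i _. destruct (a i), (b (n - i)%nat); simpl. ring.
    + apply (is_series_plus _ _ _ _ P3 P4).
Qed.

Lemma sum_n_le_loc (a b : nat -> R) N :
  (forall n, (n <= N)%nat -> a n <= b n) -> sum_n a N <= sum_n b N.
Proof.
  induction N; intros H.
  - rewrite !sum_O. apply H; lia.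
  - rewrite !sum_Sn. unfold plus; simpl.
    assert (sum_n a N <= sum_n b N) by (apply IHN; intros; apply H; lia).
    pose proof (H (S N) ltac:(lia)). lra.
Qed.

Lemma partial_sum_le_Series (a : nat -> R) N :
  (forall n, 0 <= a n) -> ex_series a -> sum_n a N <= Series a.
Proof.
  intros H E. apply (is_lim_seq_incr_compare (sum_n a)); [exact (Series_correct _ E)|].
  intros n. rewrite sum_Sn. unfold plus; simpl. pose proof (H (S n)). lra.
Qed.

Lemma Series_nonneg (a : nat -> R) : (forall n, 0 <= a n) -> ex_series a -> 0 <= Series a.
Proof.
  intros H E. apply Rle_trans with (sum_n a 0); [rewrite sum_O; apply H|].
  apply partial_sum_le_Series; auto.
Qed.

Lemma series_bounded (a : nat -> R) M :
  (forall n, 0 <= a n) -> (forall N, sum_n a N <= M) -> ex_series a /\ Series a <= M.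
Proof.
  intros H HM.
  assert (Hinc : forall n, sum_n a n <= sum_n a (S n)).
  { intros n. rewrite sum_Sn. unfold plus; simpl. pose proof (H (S n)). lra. }
  destruct (ex_finite_lim_seq_incr _ M Hinc HM) as [l Hl].
  split; [exists l; exact Hl|].
  unfold Series. rewrite (is_lim_seq_unique _ _ Hl).
  exact (is_lim_seq_le _ (fun _ => M) l M HM Hl (is_lim_seq_const M)).
Qed.

Lemma Series_tail_small (a : nat -> R) : ex_series a -> forall eta, 0 < eta ->
  exists N0, forall N, (N0 <= N)%nat -> Series (fun i => a (N + i)%nat) <= eta.
Proof.
  intros Ea eta Heta.
  destruct (proj1 (filterlim_locally _ _) (Series_correct _ Ea) (mkposreal _ Heta)) as [M HM].
  exists (S M). intros N HN.
  pose proof (HM (pred N) ltac:(lia)) as B.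
  change (Rabs (sum_n a (pred N) - Series a) < eta) in B.
  rewrite sum_n_Reals in B.
  pose proof (Series_incr_n a N ltac:(lia) Ea).
  apply Rabs_def2 in B. lra.
Qed.

Lemma Cmod_mult_pow (a z : C) n : Cmod (a * z ^ n)%C = Cmod a * Cmod z ^ n.
Proof. rewrite Cmod_mult, Cmod_pow. reflexivity. Qed.

Lemma Cmod_sum_n_le (a : nat -> C) N :
  Cmod (sum_n a N) <= sum_n (fun n => Cmod (a n)) N.
Proof.
  induction N; [rewrite !sum_O; lra|].
  rewrite !sum_Sn. unfold plus at 2; simpl.
  eapply Rle_trans; [apply Cmod_triangle|]. lra.
Qed.

Lemma Cmod_series_le (a : nat -> C) l :
  is_series a l -> ex_series (fun n => Cmod (a n)) -> Cmod l <= Series (fun n => Cmod (a n)).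
Proof.
  intros H E.
  assert (L : is_lim_seq (fun n => Cmod (sum_n a n)) (Cmod l)).
  { apply filterlim_comp with (locally l); [exact H|].
    apply (filterlim_norm (V := C_NormedModule)). }
  apply Series_correct in E.
  exact (is_lim_seq_le _ _ _ _ (Cmod_sum_n_le a) L (E : is_lim_seq _ (Finite _))).
Qed.

Lemma sq_split a b d : 0 < d -> (a + b) ^ 2 <= (1 + d) * a ^ 2 + (1 + / d) * b ^ 2.
Proof.
  intros Hd.
  assert (0 <= (d * a - b) ^ 2 / d)
    by (apply Rmult_le_pos; [apply pow2_ge_0| left; apply Rinv_0_lt_compat; auto]).
  replace ((1 + d) * a ^ 2 + (1 + / d) * b ^ 2) with ((a + b) ^ 2 + (d * a - b) ^ 2 / d)
    by (field; lra).
  lra.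
Qed.

Lemma Cmod_plus_sq_le (u v : C) : Cmod (u + v)%C ^ 2 <= 2 * Cmod u ^ 2 + 2 * Cmod v ^ 2.
Proof.
  pose proof (Cmod_triangle u v). pose proof (Cmod_ge_0 (u + v)%C).
  pose proof (Cmod_ge_0 u). pose proof (Cmod_ge_0 v).
  pose proof (sq_split (Cmod u) (Cmod v) 1 ltac:(lra)).
  assert (Cmod (u + v)%C ^ 2 <= (Cmod u + Cmod v) ^ 2) by (apply pow_incr; lra).
  rewrite Rinv_1 in *. lra.
Qed.

(* rsum f n and csum f n are sum_(i<n) f i, in R and in C.  They are
   convenient for double sums and for sums over the N-th roots of unity. *)
Fixpoint rsum (f : nat -> R) (n : nat) : R :=
  match n with O => 0 | S n => rsum f n + f n end.

Fixpoint csum (f : nat -> C) (n : nat) : C :=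
  match n with O => 0%C | S n => (csum f n + f n)%C end.

Lemma rsum_ext (f g : nat -> R) n : (forall i, (i < n)%nat -> f i = g i) -> rsum f n = rsum g n.
Proof. induction n; simpl; intros H; auto. rewrite IHn, (H n) by (intros; try apply H; lia). reflexivity. Qed.

Lemma rsum_le (f g : nat -> R) n : (forall i, (i < n)%nat -> f i <= g i) -> rsum f n <= rsum g n.
Proof.
  induction n; simpl; intros H; [lra|].
  assert (rsum f n <= rsum g n) by (apply IHn; intros; apply H; lia).
  pose proof (H n ltac:(lia)). lra.
Qed.

Lemma rsum_plus (f g : nat -> R) n : rsum (fun i => f i + g i) n = rsum f n + rsum g n.
Proof. induction n; simpl; [ring|]. rewrite IHn. ring. Qed.

Lemma rsum_scal c (f : nat -> R) n : rsum (fun i => c * f i) n = c * rsum f n.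
Proof. induction n; simpl; [ring|]. rewrite IHn. ring. Qed.

Lemma rsum_const c n : rsum (fun _ => c) n = INR n * c.
Proof. induction n; [simpl; ring|]. cbn [rsum]. rewrite IHn, S_INR. ring. Qed.

Lemma rsum_nonneg (f : nat -> R) n : (forall i, 0 <= f i) -> 0 <= rsum f n.
Proof. intros H. induction n; simpl; [lra|]. pose proof (H n). lra. Qed.

Lemma rsum_mono (f : nat -> R) n m : (forall i, 0 <= f i) -> (n <= m)%nat -> rsum f n <= rsum f m.
Proof. intros H Hnm. induction Hnm; [lra|]. simpl. pose proof (H m). lra. Qed.

Lemma rsum_term_le (f : nat -> R) n i : (forall j, 0 <= f j) -> (i < n)%nat -> f i <= rsum f n.
Proof.
  intros H Hi. induction n; [lia|]. simpl. destruct (Nat.eq_dec i n).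
  - subst. pose proof (rsum_nonneg f n H). lra.
  - pose proof (IHn ltac:(lia)). pose proof (H n). lra.
Qed.

Lemma rsum_zero_tail (f : nat -> R) n m :
  (n <= m)%nat -> (forall i, (n <= i)%nat -> f i = 0) -> rsum f m = rsum f n.
Proof. intros Hnm H. induction Hnm; auto. simpl. rewrite IHHnm, H by lia. ring. Qed.

Lemma rsum_switch (u : nat -> nat -> R) n m :
  rsum (fun i => rsum (u i) m) n = rsum (fun j => rsum (fun i => u i j) n) m.
Proof.
  induction n; simpl.
  - induction m; simpl; auto. rewrite <- IHm. ring.
  - rewrite IHn, <- rsum_plus. reflexivity.
Qed.

Lemma sum_n_rsum (f : nat -> R) k : sum_n f k = rsum f (S k).
Proof.
  induction k; [rewrite sum_O; cbn [rsum]; now rewrite Rplus_0_l|].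
  rewrite sum_Sn, IHk. reflexivity.
Qed.

Lemma rsum_sq_le (r : nat -> R) n : (rsum r n) ^ 2 <= INR n * rsum (fun i => r i ^ 2) n.
Proof.
  induction n; [simpl; lra|].
  cbn [rsum]. rewrite S_INR.
  set (s := rsum r n) in *. set (Q := rsum (fun i => r i ^ 2) n) in *. set (x := r n).
  assert (HQ : 0 <= Q) by (apply rsum_nonneg; intros; apply pow2_ge_0).
  pose proof (pos_INR n) as Hn.
  assert (Hcross : INR n * (2 * s * x) <= INR n * (Q + INR n * x ^ 2)).
  { pose proof (pow2_ge_0 (s - INR n * x)). nra. }
  destruct (Req_dec (INR n) 0) as [E|E].
  - rewrite E, Rmult_0_l in IHn. assert (s = 0) by nra. subst s. rewrite E, H. nra.
  - assert (2 * s * x <= Q + INR n * x ^ 2) by (apply Rmult_le_reg_l with (INR n); lra).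
    nra.
Qed.

Lemma csum_ext (f g : nat -> C) n : (forall i, (i < n)%nat -> f i = g i) -> csum f n = csum g n.
Proof. induction n; simpl; intros H; auto. rewrite IHn, H by (intros; apply H; lia) || lia. reflexivity. Qed.

Lemma csum_plus (f g : nat -> C) n : csum (fun i => f i + g i)%C n = (csum f n + csum g n)%C.
Proof. induction n; simpl; [ring|]. rewrite IHn. ring. Qed.

Lemma csum_mult_l (c : C) (f : nat -> C) n : csum (fun i => c * f i)%C n = (c * csum f n)%C.
Proof. induction n; simpl; [ring|]. rewrite IHn. ring. Qed.

Lemma csum_const (c : C) n : csum (fun _ => c) n = (INR n * c)%C.
Proof. induction n; [simpl; ring|]. cbn [csum]. rewrite IHn, S_INR, RtoC_plus. ring. Qed.

Lemma csum_zero (f : nat -> C) n : (forall i, (i < n)%nat -> f i = 0%C) -> csum f n = 0%C.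
Proof. induction n; intros H; simpl; auto. rewrite IHn, H by (intros; try apply H; lia). ring. Qed.

Lemma csum_single (f : nat -> C) i n :
  (i < n)%nat -> (forall j, (j < n)%nat -> j <> i -> f j = 0%C) -> csum f n = f i.
Proof.
  intros Hi H. induction n; [lia|]. cbn [csum]. destruct (Nat.eq_dec i n).
  - subst. rewrite csum_zero by (intros j Hj; apply H; lia). ring.
  - rewrite IHn, (H n) by (intros; try apply H; lia). ring.
Qed.

Lemma csum_conj (f : nat -> C) n : Cconj (csum f n) = csum (fun i => Cconj (f i)) n.
Proof.
  induction n; simpl; [apply injective_projections; simpl; ring|].
  rewrite <- IHn. destruct (csum f n), (f n). apply injective_projections; simpl; ring.
Qed.

Lemma csum_mult (f g : nat -> C) n m :
  (csum f n * csum g m)%C = csum (fun i => csum (fun j => f i * g j) m)%C n.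
Proof. induction n; simpl; [ring|]. rewrite <- IHn, csum_mult_l. ring. Qed.

Lemma csum_switch (u : nat -> nat -> C) n m :
  csum (fun i => csum (u i) m) n = csum (fun j => csum (fun i => u i j) n) m.
Proof.
  induction n; simpl.
  - induction m; simpl; auto. rewrite <- IHm. ring.
  - rewrite IHn, <- csum_plus. reflexivity.
Qed.

Lemma csum_RtoC (f : nat -> R) n : csum (fun i => RtoC (f i)) n = RtoC (rsum f n).
Proof. induction n; simpl; [reflexivity|]. rewrite IHn, RtoC_plus. reflexivity. Qed.

Lemma csum_sum_n (f : nat -> C) N : (0 < N)%nat -> csum f N = sum_n f (pred N).
Proof.
  intros HN. destruct N as [|k]; [lia|]. simpl pred. clear HN.
  induction k; [rewrite sum_O; cbn [csum]; now rewrite Cplus_0_l|].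
  rewrite sum_Sn, <- IHk. reflexivity.
Qed.

Lemma Cmod_csum_le (f : nat -> C) n : Cmod (csum f n) <= rsum (fun i => Cmod (f i)) n.
Proof. induction n; simpl; [rewrite Cmod_0; lra|]. eapply Rle_trans; [apply Cmod_triangle|]. lra. Qed.

Lemma series_terms_bounded (a : nat -> C) : ex_series a -> exists M, forall n, Cmod (a n) <= M.
Proof.
  intros [l Hl]. destruct (filterlim_bounded (sum_n a)) as [M HM]; [exists l; exact Hl|].
  exists (2 * M). intros n. destruct n.
  - pose proof (HM 0%nat) as H. rewrite sum_O in H. change (Cmod (a 0%nat) <= M) in H.
    assert (0 <= M) by (eapply Rle_trans; [apply Cmod_ge_0| exact H]). lra.
  - pose proof (HM (S n)) as H1. pose proof (HM n) as H2. rewrite sum_Sn in H1.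
    change (Cmod (sum_n a n + a (S n))%C <= M) in H1. change (Cmod (sum_n a n) <= M) in H2.
    replace (a (S n)) with ((sum_n a n + a (S n)) - sum_n a n)%C by ring.
    eapply Rle_trans; [apply Cmod_triangle|]. rewrite Cmod_opp. lra.
Qed.

(* A power series convergent on the disk converges absolutely there: compare
   with a geometric series at the radius (1 + |z|)/2. *)
Lemma analytic_abs h z : analytic_disk h -> Cmod z < 1 ->
  ex_series (fun n => Cmod (h n) * Cmod z ^ n).
Proof.
  intros Ha Hz. set (r := (1 + Cmod z) / 2).
  pose proof (Cmod_ge_0 z) as Hz0.
  assert (Hr : Cmod (RtoC r) < 1) by (rewrite Cmod_R, Rabs_pos_eq; unfold r; lra).
  destruct (series_terms_bounded _ (Ha _ Hr)) as [M HM].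
  apply (ex_series_le (fun n => Cmod (h n) * Cmod z ^ n) (fun n => M * (Cmod z / r) ^ n)).
  - intros n. unfold norm; simpl; unfold abs; simpl.
    rewrite Rabs_pos_eq by (apply Rmult_le_pos; [apply Cmod_ge_0| apply pow_le; auto]).
    specialize (HM n). rewrite Cmod_mult_pow, Cmod_R, Rabs_pos_eq in HM by (unfold r; lra).
    assert (Hrp : 0 < r ^ n) by (apply pow_lt; unfold r; lra).
    unfold Rdiv. rewrite Rpow_mult_distr, pow_inv.
    apply Rmult_le_reg_r with (r ^ n); auto.
    replace (M * (Cmod z ^ n * / r ^ n) * r ^ n) with (M * Cmod z ^ n) by (field; lra).
    replace (Cmod (h n) * Cmod z ^ n * r ^ n) with (Cmod (h n) * r ^ n * Cmod z ^ n) by ring.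
    apply Rmult_le_compat_r; [apply pow_le; auto| exact HM].
  - apply (ex_series_scal_l (V := R_NormedModule) M (fun n => (Cmod z / r) ^ n)).
    apply ex_series_geom. rewrite Rabs_pos_eq.
    + apply Rmult_lt_reg_r with r; [unfold r; lra|].
      unfold Rdiv. rewrite Rmult_assoc, Rinv_l by (unfold r; lra). unfold r; lra.
    + unfold Rdiv. apply Rmult_le_pos; auto. left; apply Rinv_0_lt_compat; unfold r; lra.
Qed.

Lemma cauchy_prod_value h g z lh lg :
  value_at h z lh -> value_at g z lg ->
  ex_series (fun n => Cmod (h n) * Cmod z ^ n) -> ex_series (fun n => Cmod (g n) * Cmod z ^ n) ->
  value_at (cauchy_prod h g) z (lh * lg)%C.
Proof.
  intros Hh Hg Ah Ag. unfold value_at.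
  apply is_series_ext with
    (fun n => sum_n (fun k => ((h k * z ^ k) * (g (n - k)%nat * z ^ (n - k)))%C) n).
  - intros n. unfold cauchy_prod. rewrite <- (sum_n_mult_r (K := C_Ring)).
    apply sum_n_ext_loc. intros k Hk. unfold mult; simpl.
    replace (z ^ n)%C with (z ^ k * z ^ (n - k))%C by (rewrite <- Cpow_add_r; f_equal; lia).
    ring.
  - apply (is_series_Cmult (fun n => (h n * z ^ n)%C) (fun n => (g n * z ^ n)%C)); auto.
    + eapply ex_series_ext; [|exact Ah]. intros n; simpl. symmetry; apply Cmod_mult_pow.
    + eapply ex_series_ext; [|exact Ag]. intros n; simpl. symmetry; apply Cmod_mult_pow.
Qed.

Lemma cauchy_prod_plus (h x y : nat -> C) n :
  cauchy_prod h (fun m => x m + y m)%C n = (cauchy_prod h x n + cauchy_prod h y n)%C.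
Proof.
  unfold cauchy_prod. rewrite <- (sum_n_plus (G := C_AbelianMonoid)). apply sum_n_ext. intros k.
  match goal with |- ?a = ?b => change (@eq C a b) end. change plus with Cplus. ring.
Qed.

Lemma cauchy_prod_scal (h x : nat -> C) (c : C) n :
  cauchy_prod h (fun m => c * x m)%C n = (c * cauchy_prod h x n)%C.
Proof.
  unfold cauchy_prod. rewrite <- (sum_n_mult_l (K := C_Ring)). apply sum_n_ext. intros k.
  match goal with |- ?a = ?b => change (@eq C a b) end. change mult with Cmult. ring.
Qed.

Lemma cauchy_prod_local (h f g : nat -> C) N : (forall m, (m <= N)%nat -> f m = g m) ->
  forall n, (n <= N)%nat -> cauchy_prod h f n = cauchy_prod h g n.
Proof.
  intros H n Hn. unfold cauchy_prod. apply sum_n_ext_loc. intros j Hj. rewrite H by lia. reflexivity.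
Qed.

Lemma cauchy_prod_ext (h x y : nat -> C) n : (forall m, x m = y m) -> cauchy_prod h x n = cauchy_prod h y n.
Proof. intros H. apply (cauchy_prod_local h x y n); auto. Qed.

Lemma cauchy_prod_zero (h x : nat -> C) n : (forall m, x m = 0%C) -> cauchy_prod h x n = 0%C.
Proof.
  intros H. unfold cauchy_prod. rewrite (sum_n_ext _ (fun _ => zero)).
  - apply (sum_n_zero (G := C_AbelianMonoid)). reflexivity.
  - intros k. rewrite H. apply Cmult_0_r.
Qed.

Lemma cauchy_prod_csum (h : nat -> C) (F : nat -> nat -> C) A n :
  cauchy_prod h (fun m => csum (fun i => F i m) A) n = csum (fun i => cauchy_prod h (F i) n) A.
Proof.
  induction A; cbn [csum].
  - apply cauchy_prod_zero. reflexivity.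
  - rewrite cauchy_prod_plus, IHA. reflexivity.
Qed.

(** * Necessity: norm equivalence forces beta to be essentially decreasing *)

Definition monomial (m : nat) : nat -> C := fun k => if Nat.eqb k m then 1%C else 0%C.

Definition spike (n : nat) (c : R) : nat -> C := fun k => if Nat.eqb k n then RtoC c else 0%C.

Lemma monomial_value m z : value_at (monomial m) z (z ^ m)%C.
Proof.
  unfold value_at.
  replace (z ^ m)%C with (monomial m m * z ^ m)%C
    by (unfold monomial; rewrite Nat.eqb_refl; apply Cmult_1_l).
  apply (is_series_single (fun n => (monomial m n * z ^ n)%C) m).
  intros k Hk. unfold monomial. apply Nat.eqb_neq in Hk. rewrite Hk. apply Cmult_0_l.
Qed.

Lemma monomial_bound m z l : Cmod z < 1 -> value_at (monomial m) z l -> Cmod l <= 1.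
Proof.
  intros Hz Hl. rewrite (is_series_C_unique _ _ _ Hl (monomial_value m z)), Cmod_pow.
  rewrite <- (pow1 m). apply pow_incr. split; [apply Cmod_ge_0|lra].
Qed.

Lemma monomial_in_Hinf m : in_Hinf (monomial m).
Proof.
  split.
  - intros z _. eexists. apply monomial_value.
  - exists 1. apply monomial_bound.
Qed.

Lemma monomial_sup_norm m : Rbar_le (sup_norm (monomial m)) 1.
Proof.
  apply (Lub_Rbar_correct _). intros x [z [l [Hz [Hv ->]]]]. exact (monomial_bound m z l Hz Hv).
Qed.

Lemma spike_norm beta n c :
  in_H2 beta (spike n c) /\ Series (fun k => Cmod (spike n c k) ^ 2 * beta k) = c ^ 2 * beta n.
Proof.
  assert (H : is_series (fun k => Cmod (spike n c k) ^ 2 * beta k) (c ^ 2 * beta n)).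
  { replace (c ^ 2 * beta n) with (Cmod (spike n c n) ^ 2 * beta n)
      by (unfold spike; rewrite Nat.eqb_refl, Cmod_R, pow2_abs; reflexivity).
    apply (is_series_single (fun k => Cmod (spike n c k) ^ 2 * beta k) n).
    intros k Hk. unfold spike. apply Nat.eqb_neq in Hk. rewrite Hk, Cmod_0.
    unfold zero; simpl. ring. }
  split; [eexists; exact H| exact (is_series_unique _ _ H)].
Qed.

Lemma cauchy_prod_monomial_spike m n c : cauchy_prod (monomial m) (spike n c) = spike (n + m) c.
Proof.
  apply functional_extensionality. intros k. unfold cauchy_prod.
  destruct (le_lt_dec m k) as [Hmk|Hmk].
  - rewrite (sum_n_single _ m k); auto.
    + unfold monomial, spike. rewrite Nat.eqb_refl, Cmult_1_l.
      destruct (Nat.eqb_spec (k - m) n), (Nat.eqb_spec k (n + m)); auto; lia.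
    + intros j Hj. unfold monomial. apply Nat.eqb_neq in Hj. rewrite Hj. apply Cmult_0_l.
  - rewrite sum_n_zero.
    + unfold spike. destruct (Nat.eqb_spec k (n + m)); [lia|]. reflexivity.
    + intros j Hj. unfold monomial. destruct (Nat.eqb_spec j m); [lia|]. apply Cmult_0_l.
Qed.

Lemma mult_norm_ub beta h f :
  in_H2 beta f -> H2_norm beta f <= 1 ->
  Rbar_le (H2_norm beta (cauchy_prod h f)) (mult_norm beta h).
Proof. intros Hf Hn. apply (Lub_Rbar_correct _). exists f; auto. Qed.

Lemma Rbar_mult_le_one (c : R) (s : Rbar) : 0 < c -> Rbar_le s 1 -> Rbar_le (Rbar_mult c s) c.
Proof.
  intros Hc Hs. destruct s as [s| |]; simpl in Hs |- *; try contradiction.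
  - rewrite <- (Rmult_1_r c) at 2. apply Rmult_le_compat_l; lra.
  - unfold Rbar_mult. simpl. destruct (Rle_dec 0 c); [|lra].
    destruct (Rle_lt_or_eq_dec 0 c r); [exact I|lra].
Qed.

Lemma ess_decreasing_of_norm_bound beta (hpos : forall n, 0 < beta n) Cst :
  0 < Cst ->
  (forall h, in_Hinf h -> Rbar_le (mult_norm beta h) (Rbar_mult (Finite Cst) (sup_norm h))) ->
  ess_decreasing beta.
Proof.
  intros HC H.
  exists (Rmax 1 (Cst ^ 2)). split; [apply Rmax_l|]. intros m n Hnm.
  set (d := (m - n)%nat). set (c := / sqrt (beta n)).
  pose proof (hpos n) as Hn. pose proof (hpos m) as Hm.
  assert (Hc2 : c ^ 2 * beta n = 1).
  { unfold c. rewrite pow_inv, pow2_sqrt by lra. field. lra. }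
  destruct (spike_norm beta n c) as [Hin Hs].
  assert (Hn1 : H2_norm beta (spike n c) <= 1) by (unfold H2_norm; rewrite Hs, Hc2, sqrt_1; lra).
  assert (Hmn : Rbar_le (H2_norm beta (spike m c)) Cst).
  { replace m with (n + d)%nat by (unfold d; lia). rewrite <- cauchy_prod_monomial_spike.
    apply (Rbar_le_trans _ _ _ (mult_norm_ub beta (monomial d) _ Hin Hn1)).
    apply (Rbar_le_trans _ _ _ (H _ (monomial_in_Hinf d))).
    apply Rbar_mult_le_one; [exact HC| apply monomial_sup_norm]. }
  simpl in Hmn. unfold H2_norm in Hmn. rewrite (proj2 (spike_norm beta m c)) in Hmn.
  assert (Hq : c ^ 2 * beta m <= Cst ^ 2).
  { rewrite <- (pow2_sqrt (c ^ 2 * beta m)) by (apply Rmult_le_pos; [apply pow2_ge_0|lra]).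
    apply pow_incr. split; [apply sqrt_pos|exact Hmn]. }
  assert (beta m <= Cst ^ 2 * beta n).
  { replace (beta m) with (c ^ 2 * beta m * beta n) by (transitivity (beta m * (c ^ 2 * beta n)); [ring| rewrite Hc2; ring]).
    apply Rmult_le_compat_r; lra. }
  eapply Rle_trans; [eassumption|]. apply Rmult_le_compat_r; [lra| apply Rmax_r].
Qed.

(** * The reproducing kernel of H^2(beta) *)

Lemma pow_lt_compat_l a b n : 0 <= a < b -> (1 <= n)%nat -> a ^ n < b ^ n.
Proof.
  intros Hab Hn. induction Hn; simpl; [lra|].
  assert (0 <= a ^ m) by (apply pow_le; lra). nra.
Qed.

Lemma Cpow_sq_swap x n : (x ^ n) ^ 2 = (x ^ 2) ^ n.
Proof. rewrite <- !pow_mult. f_equal. lia. Qed.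

Section Kernel.

Variable beta : nat -> R.
Hypothesis hpos : forall n, 0 < beta n.
Hypothesis hliminf : Rbar_le (Finite 1) (LimInf_seq (fun n => Rpower (beta n) (/ INR n))).

Lemma beta_eventually_above rho : 0 < rho < 1 -> exists N, forall n, (N <= n)%nat -> rho ^ n < beta n.
Proof.
  intros Hr. set (u := fun n => Rpower (beta n) (/ INR n)).
  assert (HN : exists N, forall n, (N <= n)%nat -> rho < u n).
  { destruct (ex_LimInf_seq u) as [l' HL]. fold u in hliminf.
    rewrite (is_LimInf_seq_unique _ _ HL) in hliminf.
    destruct l' as [l| |]; simpl in hliminf; try contradiction.
    - destruct (HL (mkposreal (1 - rho) ltac:(lra))) as [_ [N HN]]. exists N. intros n Hn.
      specialize (HN n Hn). simpl in HN. lra.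
    - destruct (HL rho) as [N HN]. exists N; auto. }
  destruct HN as [N HN]. exists (S N). intros n Hn.
  assert (Hu : u n ^ n = beta n).
  { unfold u. rewrite <- Rpower_pow by apply exp_pos.
    rewrite Rpower_mult, Rinv_l by (apply not_0_INR; lia). apply Rpower_1. auto. }
  rewrite <- Hu. apply pow_lt_compat_l; [split; [lra| apply HN; lia]| lia].
Qed.

(* Hence sum_n x^n / beta_n converges for 0 <= x < 1: compare with (2x/(1+x))^n. *)
Lemma kernel_summable x : 0 <= x < 1 -> ex_series (fun n => x ^ n / beta n).
Proof.
  intros Hx. set (rho := (1 + x) / 2).
  destruct (beta_eventually_above rho) as [N HN]; [unfold rho; lra|].
  apply (ex_series_incr_n _ N).
  apply (ex_series_le (fun k => x ^ (N + k) / beta (N + k)%nat) (fun k => (x / rho) ^ (N + k))).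
  - intros k. unfold norm; simpl. unfold abs; simpl.
    assert (Hb : 0 < beta (N + k)%nat) by auto.
    assert (Hr : 0 < rho ^ (N + k)) by (apply pow_lt; unfold rho; lra).
    assert (Hx' : 0 <= x ^ (N + k)) by (apply pow_le; lra).
    rewrite Rabs_pos_eq by (apply Rmult_le_pos; [auto| left; apply Rinv_0_lt_compat; auto]).
    unfold Rdiv. rewrite Rpow_mult_distr, pow_inv.
    apply Rmult_le_compat_l; auto.
    apply Rinv_le_contravar; auto. left. apply HN; lia.
  - apply (ex_series_incr_n (fun k => (x / rho) ^ k) N). apply ex_series_geom.
    assert (Hrho : 0 < rho) by (unfold rho; lra).
    rewrite Rabs_pos_eq by (apply Rdiv_le_0_compat; lra).
    apply Rmult_lt_reg_r with rho; [lra|]. unfold Rdiv.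
    rewrite Rmult_assoc, Rinv_l by lra. unfold rho; lra.
Qed.

(* ||k_z||^2 = sum_n |z|^(2n) / beta_n, and the normalised kernel
   k_z / ||k_z|| with coefficients conj(z)^n / (beta_n ||k_z||). *)
Definition kernel_norm_sq (z : C) : R := Series (fun n => (Cmod z ^ 2) ^ n / beta n).

Definition unit_kernel (z : C) : nat -> C :=
  fun n => (Cconj z ^ n * RtoC (/ beta n / sqrt (kernel_norm_sq z)))%C.

Variable z : C.
Hypothesis Hz : Cmod z < 1.

Local Notation q := (Cmod z ^ 2).
Local Notation K := (kernel_norm_sq z).

Lemma Cmod_sq_range : 0 <= q < 1.
Proof. pose proof (Cmod_ge_0 z). simpl; split; nra. Qed.

Lemma kernel_terms_nonneg n : 0 <= q ^ n / beta n.
Proof.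
  apply Rdiv_le_0_compat; [apply pow_le, Cmod_sq_range| apply hpos].
Qed.

Lemma kernel_norm_sq_pos : 0 < K.
Proof.
  apply Rlt_le_trans with (sum_n (fun n => q ^ n / beta n) 0).
  - rewrite sum_O. simpl. unfold Rdiv. rewrite Rmult_1_l. apply Rinv_0_lt_compat; auto.
  - apply partial_sum_le_Series; [apply kernel_terms_nonneg| apply kernel_summable, Cmod_sq_range].
Qed.

Lemma is_series_kernel : is_series (fun n => q ^ n / beta n) K.
Proof. apply Series_correct, kernel_summable, Cmod_sq_range. Qed.

Local Notation s := (sqrt (kernel_norm_sq z)).

Lemma sqrt_kernel_norm_sq_pos : 0 < s.
Proof. apply sqrt_lt_R0, kernel_norm_sq_pos. Qed.

Lemma sqrt_kernel_norm_sq_sq : s * s = K.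
Proof. apply sqrt_sqrt. pose proof kernel_norm_sq_pos. lra. Qed.

Lemma Cmod_unit_kernel n : Cmod (unit_kernel z n) = Cmod z ^ n / beta n / s.
Proof.
  unfold unit_kernel. rewrite Cmod_mult, Cmod_pow, Cmod_conj, Cmod_R.
  pose proof (hpos n). pose proof sqrt_kernel_norm_sq_pos.
  rewrite Rabs_pos_eq.
  - field. lra.
  - apply Rdiv_le_0_compat; [left; apply Rinv_0_lt_compat|]; lra.
Qed.

Lemma unit_kernel_unit :
  in_H2 beta (unit_kernel z) /\ Series (fun n => Cmod (unit_kernel z n) ^ 2 * beta n) = 1.
Proof.
  assert (Hn : forall n, q ^ n / beta n * / K = Cmod (unit_kernel z n) ^ 2 * beta n).
  { intros n. rewrite Cmod_unit_kernel, <- Cpow_sq_swap.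
    pose proof (hpos n). pose proof sqrt_kernel_norm_sq_pos. pose proof sqrt_kernel_norm_sq_sq.
    set (t := sqrt K) in *. rewrite <- H1. field. lra. }
  assert (E : is_series (fun n => Cmod (unit_kernel z n) ^ 2 * beta n) (K * / K))
    by exact (is_series_ext _ _ _ Hn (is_series_scal_r _ _ _ is_series_kernel)).
  pose proof kernel_norm_sq_pos. rewrite Rinv_r in E by lra.
  split; [eexists; exact E| exact (is_series_unique _ _ E)].
Qed.

Lemma unit_kernel_value : value_at (unit_kernel z) z (RtoC s).
Proof.
  unfold value_at. pose proof sqrt_kernel_norm_sq_pos as Hs.
  replace (RtoC s) with (RtoC (K * / s)) by (f_equal; pose proof sqrt_kernel_norm_sq_sq;
    set (t := sqrt K) in *; rewrite <- H; field; lra).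
  apply is_series_ext with (fun n => RtoC (q ^ n / beta n * / s)).
  - intros n. unfold unit_kernel.
    replace (Cconj z ^ n * RtoC (/ beta n / sqrt (kernel_norm_sq z)) * z ^ n)%C
      with ((z * Cconj z) ^ n * RtoC (/ beta n / s))%C by (rewrite Cpow_mult_l; ring).
    rewrite <- Cmod2_conj, <- RtoC_pow, <- RtoC_mult. f_equal.
    pose proof (hpos n). field. repeat split; lra.
  - apply is_series_RtoC, is_series_scal_r, is_series_kernel.
Qed.

Lemma unit_kernel_abs : ex_series (fun n => Cmod (unit_kernel z n) * Cmod z ^ n).
Proof.
  assert (Hn : forall n, q ^ n / beta n * / s = Cmod (unit_kernel z n) * Cmod z ^ n).
  { intros n. rewrite Cmod_unit_kernel, <- Cpow_sq_swap. simpl.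
    pose proof (hpos n). pose proof sqrt_kernel_norm_sq_pos. field. lra. }
  exists (K * / s). exact (is_series_ext _ _ _ Hn (is_series_scal_r _ _ _ is_series_kernel)).
Qed.

End Kernel.

(** * Bounded multipliers are bounded functions *)

(* Cauchy-Schwarz for nonnegative series, in the form sum a_n b_n <= A B
   whenever sum a_n^2 <= A^2 and sum b_n^2 <= B^2; it follows termwise from
   a_n b_n <= ((B/A) a_n^2 + (A/B) b_n^2) / 2. *)
Lemma series_cauchy_schwarz (a b : nat -> R) A B : 0 < A -> 0 < B ->
  (forall n, 0 <= a n) -> (forall n, 0 <= b n) ->
  ex_series (fun n => a n ^ 2) -> ex_series (fun n => b n ^ 2) ->
  Series (fun n => a n ^ 2) <= A ^ 2 -> Series (fun n => b n ^ 2) <= B ^ 2 ->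
  ex_series (fun n => a n * b n) /\ Series (fun n => a n * b n) <= A * B.
Proof.
  intros HA HB Ha Hb Ea Eb SA SB. set (t := B / A).
  assert (Ht : 0 < t) by (apply Rdiv_lt_0_compat; auto).
  set (c := fun n => (t * a n ^ 2 + b n ^ 2 / t) / 2).
  assert (Hc : is_series c ((t * Series (fun n => a n ^ 2) + Series (fun n => b n ^ 2) / t) / 2)).
  { apply (is_series_ext (fun n => scal (/ 2) (plus (scal t (a n ^ 2)) (scal (/ t) (b n ^ 2))))).
    - intros n. unfold c, scal, plus; simpl; unfold mult; simpl. field. lra.
    - replace ((t * Series (fun n => a n ^ 2) + Series (fun n => b n ^ 2) / t) / 2) with
        (scal (/ 2) (plus (scal t (Series (fun n => a n ^ 2))) (scal (/ t) (Series (fun n => b n ^ 2)))))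
        by (unfold scal, plus; simpl; unfold mult; simpl; field; lra).
      apply (is_series_scal_l (V := R_NormedModule)), (is_series_plus (V := R_NormedModule));
        apply (is_series_scal_l (V := R_NormedModule)), Series_correct; auto. }
  assert (Hle : forall n, 0 <= a n * b n <= c n).
  { intros n. split; [apply Rmult_le_pos; auto|]. unfold c.
    assert (0 <= (t * a n - b n) ^ 2 / t) by (apply Rdiv_le_0_compat; [apply pow2_ge_0| lra]).
    replace ((t * a n ^ 2 + b n ^ 2 / t) / 2) with (a n * b n + (t * a n - b n) ^ 2 / t / 2)
      by (field; lra).
    lra. }
  assert (Ec : ex_series c) by (eexists; exact Hc).
  split.
  - apply (ex_series_le (V := R_CompleteNormedModule) _ c); [|exact Ec].
    intros n. unfold norm; simpl; unfold abs; simpl. rewrite Rabs_pos_eq; apply Hle.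
  - eapply Rle_trans; [apply (Series_le _ _ Hle Ec)|]. rewrite (is_series_unique _ _ Hc).
    assert (t * Series (fun n => a n ^ 2) <= t * A ^ 2) by (apply Rmult_le_compat_l; lra).
    assert (Series (fun n => b n ^ 2) / t <= B ^ 2 / t) by (apply Rmult_le_compat_r; [left; apply Rinv_0_lt_compat|]; lra).
    replace (A * B) with ((t * A ^ 2 + B ^ 2 / t) / 2) by (unfold t; field; lra).
    lra.
Qed.

(* If ||hf||^2 <= M^2 for every unit vector f of H^2(beta), then |h(z)| <= M on
   the disk: apply h to the normalised kernel k at z; (hk)(z) = h(z) ||k_z||,
   and |(hk)(z)| <= ||hk|| ||k_z|| by Cauchy-Schwarz. *)
Lemma multiplier_pointwise_bound beta (hpos : forall n, 0 < beta n)
  (hliminf : Rbar_le (Finite 1) (LimInf_seq (fun n => Rpower (beta n) (/ INR n)))) h M :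
  analytic_disk h -> 0 < M ->
  (forall f, in_H2 beta f -> Series (fun n => Cmod (f n) ^ 2 * beta n) <= 1 ->
     in_H2 beta (cauchy_prod h f) /\
     Series (fun n => Cmod (cauchy_prod h f n) ^ 2 * beta n) <= M ^ 2) ->
  forall z l, Cmod z < 1 -> value_at h z l -> Cmod l <= M.
Proof.
  intros Ha HM Hm z l Hz Hl.
  set (k := unit_kernel beta z). set (s := sqrt (kernel_norm_sq beta z)).
  pose proof (sqrt_kernel_norm_sq_pos beta hpos hliminf z Hz) as Hs.
  destruct (unit_kernel_unit beta hpos hliminf z Hz) as [Hkin Hk1].
  destruct (Hm k Hkin (Req_le _ _ Hk1)) as [Hck Hcn].
  pose proof (cauchy_prod_value h k z l (RtoC s) Hl (unit_kernel_value beta hpos hliminf z Hz)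
    (analytic_abs h z Ha Hz) (unit_kernel_abs beta hpos hliminf z Hz)) as Vc.
  set (c := cauchy_prod h k) in *.
  set (a := fun n => Cmod (c n) * sqrt (beta n)).
  set (b := fun n => Cmod z ^ n / sqrt (beta n)).
  assert (Hsb : forall n, 0 < sqrt (beta n)) by (intros; apply sqrt_lt_R0; auto).
  assert (Hab : forall n, a n * b n = Cmod (c n * z ^ n)%C).
  { intros n. unfold a, b. rewrite Cmod_mult_pow. pose proof (Hsb n). field. lra. }
  assert (Ha2 : forall n, Cmod (c n) ^ 2 * beta n = a n ^ 2).
  { intros n. unfold a. rewrite Rpow_mult_distr, pow2_sqrt; [reflexivity| left; auto]. }
  assert (Hb2 : forall n, (Cmod z ^ 2) ^ n / beta n = b n ^ 2).
  { intros n. unfold b. rewrite <- Cpow_sq_swap. unfold Rdiv.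
    rewrite Rpow_mult_distr, pow_inv, pow2_sqrt; [reflexivity| left; auto]. }
  assert (EK : ex_series (fun n => (Cmod z ^ 2) ^ n / beta n))
    by (apply (kernel_summable beta hpos hliminf), Cmod_sq_range; exact Hz).
  destruct (series_cauchy_schwarz a b M s HM Hs) as [Eab Sab].
  - intros n; unfold a; apply Rmult_le_pos; [apply Cmod_ge_0| left; auto].
  - intros n; unfold b; apply Rdiv_le_0_compat; [apply pow_le, Cmod_ge_0| auto].
  - exact (ex_series_ext _ _ Ha2 Hck).
  - exact (ex_series_ext _ _ Hb2 EK).
  - rewrite <- (Series_ext _ _ Ha2). exact Hcn.
  - rewrite <- (Series_ext _ _ Hb2). unfold s. rewrite pow2_sqrt; [apply Rle_refl|].
    left; apply (kernel_norm_sq_pos beta hpos hliminf z Hz).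
  - assert (Cl : Cmod (l * RtoC s)%C <= Series (fun n => Cmod (c n * z ^ n)%C))
      by (apply Cmod_series_le; [exact Vc| exact (ex_series_ext _ _ Hab Eab)]).
    rewrite <- (Series_ext _ _ Hab), Cmod_mult, Cmod_R, Rabs_pos_eq in Cl by (left; exact Hs).
    apply Rmult_le_reg_r with s; [exact Hs| exact (Rle_trans _ _ _ Cl Sab)].
Qed.

(** * Roots of unity and the discrete Parseval identity *)

Definition cis (t : R) : C := (cos t, sin t).

Lemma cis_mult a b : (cis a * cis b)%C = cis (a + b).
Proof. unfold cis, Cmult; simpl. rewrite cos_plus, sin_plus. f_equal; ring. Qed.

Lemma cis_conj a : Cconj (cis a) = cis (- a).
Proof. unfold cis, Cconj; simpl. rewrite cos_neg, sin_neg. reflexivity. Qed.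

Lemma cis_0 : cis 0 = 1%C.
Proof. unfold cis. rewrite cos_0, sin_0. reflexivity. Qed.

Lemma cis_pow a j : (cis a ^ j)%C = cis (INR j * a).
Proof.
  induction j; [simpl; rewrite Rmult_0_l, cis_0; reflexivity|].
  rewrite Cpow_S, IHj, cis_mult, S_INR. f_equal. ring.
Qed.

Lemma Cmod_cis a : Cmod (cis a) = 1.
Proof.
  unfold cis, Cmod. cbn [fst snd]. pose proof (sin2_cos2 a). unfold Rsqr in H.
  replace (cos a ^ 2 + sin a ^ 2) with 1 by nra. apply sqrt_1.
Qed.

Lemma cis_2PI_mult n : cis (2 * PI * INR n) = 1%C.
Proof.
  unfold cis. replace (2 * PI * INR n) with (0 + 2 * INR n * PI) by ring.
  rewrite cos_period, sin_period, cos_0, sin_0. reflexivity.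
Qed.

Lemma cis_neq_1 phi : 0 < Rabs phi < 2 * PI -> cis phi <> 1%C.
Proof.
  intros H HE. injection HE as Hc Hs.
  assert (Hc' : cos (Rabs phi) = 1)
    by (destruct (Rle_dec 0 phi); [rewrite Rabs_pos_eq| rewrite Rabs_left, cos_neg]; auto; lra).
  replace (Rabs phi) with (2 * (Rabs phi / 2)) in Hc' by field.
  rewrite cos_2a_sin in Hc'.
  assert (0 < sin (Rabs phi / 2)) by (apply sin_gt_0; lra). nra.
Qed.

Lemma geom_csum_root (v : C) (N : nat) : v <> 1%C -> (v ^ N)%C = 1%C -> csum (fun j => v ^ j)%C N = 0%C.
Proof.
  intros Hv HN.
  assert (Hg : forall n, (csum (fun j => v ^ j) n * (v - 1))%C = (v ^ n - 1)%C).
  { induction n; simpl; [ring|]. rewrite Cmult_plus_distr_r, IHn. ring. }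
  specialize (Hg N). rewrite HN in Hg.
  pose proof (Cminus_eq_contra _ _ Hv) as Hv1.
  set (S := csum _ N) in *.
  replace S with (S * (v - 1) * / (v - 1))%C by (field; auto).
  rewrite Hg. ring.
Qed.

Definition root_of_unity (N j : nat) : C := cis (2 * PI * INR j / INR N).

Lemma root_angle_range N n m : (n < N)%nat -> (m < N)%nat -> n <> m ->
  0 < Rabs (2 * PI * (INR n - INR m) / INR N) < 2 * PI.
Proof.
  intros Hn Hm Hnm. pose proof PI_RGT_0.
  assert (HNr : 0 < INR N) by (apply lt_0_INR; lia).
  assert (Hgap : forall p q, (q < p < N)%nat -> 1 <= INR p - INR q < INR N).
  { intros p q Hpq. rewrite <- minus_INR by lia. split.
    - apply (le_INR 1); lia.
    - apply lt_INR; lia. }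
  assert (Hd : 1 <= Rabs (INR n - INR m) < INR N).
  { destruct (lt_dec m n).
    - rewrite Rabs_pos_eq; [apply Hgap; lia|]. pose proof (Hgap n m ltac:(lia)). lra.
    - rewrite Rabs_minus_sym, Rabs_pos_eq; [apply Hgap; lia|]. pose proof (Hgap m n ltac:(lia)). lra. }
  unfold Rdiv. rewrite !Rabs_mult, Rabs_inv, (Rabs_pos_eq 2), (Rabs_pos_eq PI), (Rabs_pos_eq (INR N)) by lra.
  split.
  - apply Rmult_lt_0_compat; [nra| apply Rinv_0_lt_compat; lra].
  - apply Rmult_lt_reg_r with (INR N); [lra|].
    rewrite Rmult_assoc, Rinv_l by lra. nra.
Qed.

Lemma roots_orthogonality N n m : (0 < N)%nat -> (n < N)%nat -> (m < N)%nat ->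
  csum (fun j => root_of_unity N j ^ n * Cconj (root_of_unity N j ^ m))%C N
  = if Nat.eqb n m then RtoC (INR N) else 0%C.
Proof.
  intros HN Hn Hm.
  assert (HNr : 0 < INR N) by (apply lt_0_INR; lia).
  set (phi := 2 * PI * (INR n - INR m) / INR N).
  rewrite (csum_ext _ (fun j => (cis phi) ^ j)%C).
  2:{ intros j _. unfold root_of_unity. rewrite !cis_pow, cis_conj, cis_mult.
      f_equal. unfold phi. field. lra. }
  destruct (Nat.eqb_spec n m).
  - subst. unfold phi. replace (2 * PI * (INR m - INR m) / INR N) with 0 by (field; lra).
    rewrite cis_0, (csum_ext _ (fun _ => 1%C)) by (intros; apply Cpow_1_l).
    rewrite csum_const. ring.
  - apply geom_csum_root; [apply cis_neq_1, root_angle_range; auto|].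
    rewrite cis_pow. unfold phi.
    replace (INR N * (2 * PI * (INR n - INR m) / INR N)) with (2 * PI * INR n + - (2 * PI * INR m))
      by (field; lra).
    rewrite <- cis_mult, <- cis_conj, !cis_2PI_mult. apply injective_projections; simpl; ring.
Qed.

Lemma Cconj_mult (x y : C) : Cconj (x * y)%C = (Cconj x * Cconj y)%C.
Proof. destruct x, y. apply injective_projections; simpl; ring. Qed.

Lemma discrete_parseval_C (a : nat -> C) N : (0 < N)%nat ->
  csum (fun j => RtoC (Cmod (csum (fun n => a n * root_of_unity N j ^ n) N) ^ 2))%C N =
  (INR N * csum (fun n => RtoC (Cmod (a n) ^ 2)) N)%C.
Proof.
  intros HN.
  set (T := fun n m j =>
    ((a n * root_of_unity N j ^ n) * Cconj (a m * root_of_unity N j ^ m))%C).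
  rewrite (csum_ext _ (fun j => csum (fun n => csum (fun m => T n m j) N) N)).
  2:{ intros j _. rewrite Cmod2_conj, csum_conj. apply csum_mult. }
  rewrite csum_switch.
  rewrite (csum_ext _ (fun n => csum (fun m => csum (T n m) N) N)) by (intros; apply csum_switch).
  rewrite <- csum_mult_l. apply csum_ext. intros n Hn.
  assert (HT : forall m, csum (T n m) N
    = (a n * Cconj (a m)
       * csum (fun j => root_of_unity N j ^ n * Cconj (root_of_unity N j ^ m)) N)%C).
  { intros m. rewrite <- csum_mult_l. apply csum_ext. intros j _. unfold T.
    rewrite Cconj_mult. ring. }
  rewrite (csum_single _ n N Hn).
  - rewrite HT, roots_orthogonality, Nat.eqb_refl, Cmod2_conj by auto. ring.
  - intros m Hm Hmn. rewrite HT, roots_orthogonality by auto.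
    destruct (Nat.eqb_spec n m); [lia| ring].
Qed.

Lemma discrete_parseval (a : nat -> C) N : (0 < N)%nat ->
  rsum (fun j => Cmod (csum (fun n => a n * root_of_unity N j ^ n)%C N) ^ 2) N =
  INR N * rsum (fun n => Cmod (a n) ^ 2) N.
Proof.
  intros HN. pose proof (discrete_parseval_C a N HN) as P.
  rewrite !csum_RtoC, <- RtoC_mult in P. injection P; auto.
Qed.

(** * Bounded functions are contractive on truncated unweighted norms *)

Definition supp_le (g : nat -> C) (k : nat) : Prop := forall n, (k < n)%nat -> g n = 0%C.

Section TruncatedEstimate.

Variable h : nat -> C.
Variable Sb : R.
Hypothesis Ha : analytic_disk h.
Hypothesis Hb : forall z l, Cmod z < 1 -> value_at h z l -> Cmod l <= Sb.

Variable g : nat -> C.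
Variable k : nat.
Hypothesis Hg : supp_le g k.

Local Notation c := (cauchy_prod h g).

Lemma supp_abs_series w : ex_series (fun n => Cmod (g n) * Cmod w ^ n).
Proof. apply (ex_series_finite_R _ k). intros n Hn. rewrite Hg, Cmod_0 by lia. ring. Qed.

Lemma cauchy_prod_abs_series r : 0 <= r < 1 -> ex_series (fun n => Cmod (c n) * r ^ n).
Proof.
  intros Hr.
  assert (Hzr : Cmod (RtoC r) < 1) by (rewrite Cmod_R, Rabs_pos_eq; lra).
  pose proof (analytic_abs h (RtoC r) Ha Hzr) as Ah.
  pose proof (supp_abs_series (RtoC r)) as Ag.
  rewrite Cmod_R, Rabs_pos_eq in Ah, Ag by lra.
  destruct Ah as [lh Lh], Ag as [lg Lg].
  pose proof (is_series_mult_pos _ _ _ _ Lh Lg) as P.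
  apply (ex_series_le (fun n => Cmod (c n) * r ^ n)
    (fun n => sum_f_R0 (fun j => Cmod (h j) * r ^ j * (Cmod (g (n - j)%nat) * r ^ (n - j))) n)).
  - intros n. unfold norm; simpl; unfold abs; simpl.
    rewrite Rabs_pos_eq by (apply Rmult_le_pos; [apply Cmod_ge_0| apply pow_le; lra]).
    unfold cauchy_prod. eapply Rle_trans.
    { apply Rmult_le_compat_r; [apply pow_le; lra| apply Cmod_sum_n_le]. }
    rewrite <- sum_n_Reals, <- (sum_n_mult_r (K := R_Ring)).
    apply sum_n_le_loc. intros j Hj. unfold mult; simpl. rewrite Cmod_mult.
    replace (r ^ n) with (r ^ j * r ^ (n - j)) by (rewrite <- pow_add; f_equal; lia).
    apply Req_le; ring.
  - eexists. apply P; intros n; apply Rmult_le_pos; try apply Cmod_ge_0; apply pow_le; lra.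
Qed.

Variable r : R.
Hypothesis Hr : 0 < r < 1.
Variable N : nat.
Hypothesis HN : (k < N)%nat.

Definition tail_at_radius : R := Series (fun i => Cmod (c (N + i)%nat) * r ^ (N + i)).

(* At w = r w_j, h(w) g(w) = (hg)(w) differs from its partial sum of order N
   by at most the tail; since |h(w)| <= Sb this bounds the partial sum. *)
Lemma partial_sum_at_root_bound j :
  Cmod (csum (fun n => (c n * RtoC (r ^ n)) * root_of_unity N j ^ n)%C N)
  <= Sb * Cmod (csum (fun n => (g n * RtoC (r ^ n)) * root_of_unity N j ^ n)%C N) + tail_at_radius.
Proof.
  set (w := (RtoC r * root_of_unity N j)%C).
  assert (Hwm : Cmod w = r)
    by (unfold w, root_of_unity; rewrite Cmod_mult, Cmod_R, Cmod_cis, Rabs_pos_eq; lra).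
  assert (Hw1 : Cmod w < 1) by lra.
  assert (Hw : forall (x : C) n, (x * RtoC (r ^ n) * root_of_unity N j ^ n)%C = (x * w ^ n)%C).
  { intros x n. unfold w. rewrite Cpow_mult_l, <- RtoC_pow. ring. }
  rewrite !(csum_ext _ _ N (fun n _ => Hw _ n)), !csum_sum_n by lia.
  set (G := sum_n (fun n => (g n * w ^ n)%C) (pred N)).
  set (Q := sum_n (fun n => (c n * w ^ n)%C) (pred N)).
  assert (Vg : value_at g w G).
  { apply (is_series_finite (V := C_NormedModule)). intros m Hm.
    rewrite Hg by lia. apply Cmult_0_l. }
  destruct (Ha w Hw1) as [hw Hhw].
  pose proof (cauchy_prod_value h g w hw G Hhw Vg (analytic_abs h w Ha Hw1) (supp_abs_series w)) as Vc.
  assert (Tl : is_series (fun i => (c (N + i)%nat * w ^ (N + i))%C) (hw * G - Q)%C).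
  { assert (E : @eq C (plus (hw * G - Q)%C Q) (hw * G)%C) by (change plus with Cplus; ring).
    assert (Vc' : is_series (fun n => (c n * w ^ n)%C) (plus (hw * G - Q)%C Q))
      by (rewrite E; exact Vc).
    exact (is_series_incr_n _ N _ ltac:(lia) Vc'). }
  assert (HT : Cmod (hw * G - Q)%C <= tail_at_radius).
  { assert (Habs : forall i, Cmod (c (N + i)%nat * w ^ (N + i))%C = Cmod (c (N + i)%nat) * r ^ (N + i))
      by (intros i; rewrite Cmod_mult_pow, Hwm; reflexivity).
    unfold tail_at_radius. rewrite <- (Series_ext _ _ Habs).
    apply Cmod_series_le; [exact Tl|]. eapply ex_series_ext; [intros i; symmetry; apply Habs|].
    apply (ex_series_incr_n (fun n => Cmod (c n) * r ^ n)), cauchy_prod_abs_series; lra. }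
  replace Q with (hw * G + - (hw * G - Q))%C by ring.
  eapply Rle_trans; [apply Cmod_triangle|]. rewrite Cmod_opp, Cmod_mult.
  pose proof (Hb w hw Hw1 Hhw). pose proof (Cmod_ge_0 G).
  apply Rplus_le_compat; [apply Rmult_le_compat_r|]; auto.
Qed.

(* Summing the square of the previous estimate over the N-th roots of unity
   and using Parseval on both sides. *)
Lemma truncated_estimate_at_radius d : 0 < d ->
  rsum (fun n => Cmod (c n * RtoC (r ^ n))%C ^ 2) N
  <= (1 + d) * Sb ^ 2 * rsum (fun n => Cmod (g n * RtoC (r ^ n))%C ^ 2) N
     + (1 + / d) * tail_at_radius ^ 2.
Proof.
  intros Hd. assert (HNr : 0 < INR N) by (apply lt_0_INR; lia).
  assert (Sum : rsum (fun j => Cmod (csum (fun n => (c n * RtoC (r ^ n)) * root_of_unity N j ^ n)%C N) ^ 2) N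
     <= (1 + d) * Sb ^ 2
          * rsum (fun j => Cmod (csum (fun n => (g n * RtoC (r ^ n)) * root_of_unity N j ^ n)%C N) ^ 2) N
        + INR N * ((1 + / d) * tail_at_radius ^ 2)).
  { rewrite <- rsum_scal, <- rsum_const, <- rsum_plus. apply rsum_le. intros j _.
    eapply Rle_trans; [apply pow_incr; split; [apply Cmod_ge_0| apply partial_sum_at_root_bound]|].
    eapply Rle_trans; [apply (sq_split _ _ d Hd)|]. apply Req_le. rewrite Rpow_mult_distr. ring. }
  rewrite !discrete_parseval in Sum by lia.
  apply Rmult_le_reg_l with (INR N); [exact HNr|]. nra.
Qed.

End TruncatedEstimate.

Lemma bernoulli y n : 0 <= y <= 1 -> 1 - INR n * (1 - y) <= y ^ n.
Proof.
  intros Hy. induction n; [simpl; lra|].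
  rewrite S_INR. simpl. assert (0 <= y ^ n) by (apply pow_le; lra).
  pose proof (pos_INR n).
  assert (y * (1 - INR n * (1 - y)) <= y * y ^ n) by (apply Rmult_le_compat_l; lra).
  assert (0 <= INR n * ((1 - y) * (1 - y))) by (apply Rmult_le_pos; nra).
  nra.
Qed.

Section TruncatedLimits.

Variable h : nat -> C.
Variable Sb : R.
Hypothesis Ha : analytic_disk h.
Hypothesis Hb : forall z l, Cmod z < 1 -> value_at h z l -> Cmod l <= Sb.

Lemma rsum_supp_radius_le g k r N : supp_le g k -> 0 < r < 1 -> (k < N)%nat ->
  rsum (fun n => Cmod (g n * RtoC (r ^ n))%C ^ 2) N <= rsum (fun n => Cmod (g n) ^ 2) (S k).
Proof.
  intros Hg Hr HN.
  rewrite <- (rsum_zero_tail (fun n => Cmod (g n) ^ 2) (S k) N) by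
    (lia || (intros i Hi; rewrite Hg, Cmod_0 by lia; ring)).
  apply rsum_le. intros i _. apply pow_incr. split; [apply Cmod_ge_0|].
  rewrite Cmod_mult, Cmod_R, Rabs_pos_eq by (apply pow_le; lra).
  rewrite <- (Rmult_1_r (Cmod (g i))) at 2. apply Rmult_le_compat_l; [apply Cmod_ge_0|].
  rewrite <- (pow1 i). apply pow_incr. lra.
Qed.

(* Letting N -> oo (the tail vanishes) and then d -> 0 in
   truncated_estimate_at_radius. *)
Lemma truncated_estimate_radius g k r : supp_le g k -> 0 < r < 1 ->
  rsum (fun n => Cmod (cauchy_prod h g n * RtoC (r ^ n))%C ^ 2) (S k)
  <= Sb ^ 2 * rsum (fun n => Cmod (g n) ^ 2) (S k).
Proof.
  intros Hg Hr.
  set (B := rsum (fun n => Cmod (g n) ^ 2) (S k)).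
  assert (HB : 0 <= B) by (apply rsum_nonneg; intros; apply pow2_ge_0).
  assert (HSB : 0 <= Sb ^ 2 * B) by (apply Rmult_le_pos; [apply pow2_ge_0| auto]).
  apply Rle_plus_epsilon. intros eps Heps.
  set (d := eps / (2 * (Sb ^ 2 * B + 1))).
  assert (Hd : 0 < d) by (apply Rdiv_lt_0_compat; lra).
  assert (Hdd : d * (Sb ^ 2 * B) <= eps / 2).
  { unfold d. apply Rmult_le_reg_r with (2 * (Sb ^ 2 * B + 1)); [lra|].
    replace (eps / (2 * (Sb ^ 2 * B + 1)) * (Sb ^ 2 * B) * (2 * (Sb ^ 2 * B + 1)))
      with (eps * (Sb ^ 2 * B)) by (field; lra).
    nra. }
  set (eta := eps / 2 / (1 + / d)).
  assert (Heta : 0 < eta) by (apply Rdiv_lt_0_compat; [lra|]; pose proof (Rinv_0_lt_compat d Hd); lra).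
  destruct (Series_tail_small _ (cauchy_prod_abs_series h Ha g k Hg r ltac:(lra))
              (sqrt eta) (sqrt_lt_R0 _ Heta)) as [N0 HN0].
  set (N := Nat.max N0 (S k)).
  pose proof (truncated_estimate_at_radius h Sb Ha Hb g k Hg r Hr N ltac:(lia) d Hd) as E.
  assert (Htail : (1 + / d) * tail_at_radius h g r N ^ 2 <= eps / 2).
  { assert (Ht0 : 0 <= tail_at_radius h g r N).
    { apply Series_nonneg; [intros i; apply Rmult_le_pos; [apply Cmod_ge_0| apply pow_le; lra]|].
      apply (ex_series_incr_n (fun n => Cmod (cauchy_prod h g n) * r ^ n)).
      apply (cauchy_prod_abs_series h Ha g k Hg); lra. }
    assert (Ht : tail_at_radius h g r N <= sqrt eta) by (apply HN0; lia).
    assert (tail_at_radius h g r N ^ 2 <= eta)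
      by (rewrite <- (pow2_sqrt eta) by lra; apply pow_incr; lra).
    pose proof (Rinv_0_lt_compat d Hd).
    replace (eps / 2) with ((1 + / d) * eta) by (unfold eta; field; lra).
    apply Rmult_le_compat_l; lra. }
  assert (X : rsum (fun n => Cmod (cauchy_prod h g n * RtoC (r ^ n))%C ^ 2) (S k)
              <= rsum (fun n => Cmod (cauchy_prod h g n * RtoC (r ^ n))%C ^ 2) N)
    by (apply rsum_mono; [intros; apply pow2_ge_0| lia]).
  pose proof (rsum_supp_radius_le g k r N Hg Hr ltac:(lia)) as G. fold B in G.
  assert ((1 + d) * Sb ^ 2 * rsum (fun n => Cmod (g n * RtoC (r ^ n))%C ^ 2) N <= (1 + d) * Sb ^ 2 * B)
    by (apply Rmult_le_compat_l; [apply Rmult_le_pos; [lra| apply pow2_ge_0]| exact G]).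
  nra.
Qed.

Lemma pow_le_pow_small y m n : 0 <= y <= 1 -> (m <= n)%nat -> y ^ n <= y ^ m.
Proof.
  intros Hy Hmn. replace n with (m + (n - m))%nat by lia. rewrite pow_add.
  rewrite <- (Rmult_1_r (y ^ m)) at 2. apply Rmult_le_compat_l; [apply pow_le; lra|].
  rewrite <- (pow1 (n - m)). apply pow_incr. lra.
Qed.

(* Letting r -> 1, using (r^n)^2 >= (r^2)^k >= 1 - 2k(1 - r) for n <= k. *)
Lemma truncated_estimate_supp g k : supp_le g k ->
  rsum (fun n => Cmod (cauchy_prod h g n) ^ 2) (S k) <= Sb ^ 2 * rsum (fun n => Cmod (g n) ^ 2) (S k).
Proof.
  intros Hg.
  set (Y := rsum (fun n => Cmod (cauchy_prod h g n) ^ 2) (S k)).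
  set (B := rsum (fun n => Cmod (g n) ^ 2) (S k)).
  assert (HY : 0 <= Y) by (apply rsum_nonneg; intros; apply pow2_ge_0).
  assert (Hr : forall r, 0 < r < 1 -> (1 - 2 * INR k * (1 - r)) * Y <= Sb ^ 2 * B).
  { intros r Hr. eapply Rle_trans; [|apply (truncated_estimate_radius g k r Hg Hr)].
    unfold Y. rewrite <- rsum_scal. apply rsum_le. intros n Hn.
    rewrite Cmod_mult, Cmod_R, Rabs_pos_eq, Rpow_mult_distr, Rmult_comm by (apply pow_le; lra).
    apply Rmult_le_compat_l; [apply pow2_ge_0|].
    rewrite Cpow_sq_swap. eapply Rle_trans; [|apply pow_le_pow_small with (m := n) (n := k); [split; nra|lia]].
    eapply Rle_trans; [|apply bernoulli; split; nra].
    assert (0 <= INR k * ((1 - r) * (1 - r))) by (apply Rmult_le_pos; [apply pos_INR| nra]).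
    replace (r ^ 2) with (r * r) by ring. nra. }
  apply Rle_plus_epsilon. intros eps Heps.
  set (t := Rmin (eps / (2 * INR k * Y + 1)) (1 / 2)).
  pose proof (pos_INR k) as Hk.
  assert (Ht : 0 < t) by (apply Rmin_glb_lt; [apply Rdiv_lt_0_compat; nra| lra]).
  assert (Ht2 : t <= 1 / 2) by apply Rmin_r.
  assert (Htk : 2 * INR k * Y * t <= eps).
  { apply Rle_trans with (2 * INR k * Y * (eps / (2 * INR k * Y + 1))).
    - apply Rmult_le_compat_l; [nra| apply Rmin_l].
    - apply Rmult_le_reg_r with (2 * INR k * Y + 1); [nra|].
      replace (2 * INR k * Y * (eps / (2 * INR k * Y + 1)) * (2 * INR k * Y + 1))
        with (2 * INR k * Y * eps) by (field; nra).
      nra. }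
  pose proof (Hr (1 - t) ltac:(lra)) as H1.
  replace (1 - (1 - t)) with t in H1 by ring. nra.
Qed.

(* Truncation: coefficient n <= k of hf only involves f_0, ..., f_k. *)
Definition truncate (k : nat) (f : nat -> C) : nat -> C := fun n => if Nat.leb n k then f n else 0%C.

Lemma truncate_supp k f : supp_le (truncate k f) k.
Proof. intros n Hn. unfold truncate. destruct (Nat.leb_spec n k); [lia| reflexivity]. Qed.

Lemma truncate_low k f m : (m <= k)%nat -> truncate k f m = f m.
Proof. intros Hm. unfold truncate. destruct (Nat.leb_spec m k); [reflexivity| lia]. Qed.

Lemma truncated_estimate f k :
  rsum (fun n => Cmod (cauchy_prod h f n) ^ 2) (S k) <= Sb ^ 2 * rsum (fun n => Cmod (f n) ^ 2) (S k).
Proof.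
  pose proof (truncated_estimate_supp (truncate k f) k (truncate_supp k f)) as T.
  rewrite (rsum_ext (fun n => Cmod (f n) ^ 2) (fun n => Cmod (truncate k f n) ^ 2))
    by (intros i Hi; rewrite truncate_low by lia; reflexivity).
  rewrite (rsum_ext _ (fun n => Cmod (cauchy_prod h (truncate k f) n) ^ 2)); [exact T|].
  intros i Hi. rewrite (cauchy_prod_local h f (truncate k f) k); [reflexivity| |lia].
  intros m Hm. symmetry. apply truncate_low, Hm.
Qed.

End TruncatedLimits.

(** * Sufficiency: bounded functions are multipliers when beta is essentially decreasing *)

Fixpoint running_min (beta : nat -> R) (n : nat) : R :=
  match n with O => beta O | S n => Rmin (running_min beta n) (beta (S n)) end.

Lemma running_min_le beta n : running_min beta n <= beta n.
Proof. destruct n; simpl; [lra| apply Rmin_r]. Qed.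

Lemma running_min_decr beta n : running_min beta (S n) <= running_min beta n.
Proof. apply Rmin_l. Qed.

Lemma running_min_pos beta : (forall n, 0 < beta n) -> forall n, 0 < running_min beta n.
Proof. intros H n. induction n; simpl; [auto| apply Rmin_glb_lt; auto]. Qed.

Lemma running_min_ge beta C0 : (forall m n, (n <= m)%nat -> beta m <= C0 * beta n) ->
  forall n N, (n <= N)%nat -> beta N <= C0 * running_min beta n.
Proof.
  intros H n. induction n; intros N HN; simpl; [apply H; lia|].
  unfold Rmin. destruct (Rle_dec (running_min beta n) (beta (S n))); [apply IHn| apply H]; lia.
Qed.

Lemma abel_summation (x y g : nat -> R) :
  (forall n, g (S n) <= g n) -> (forall n, 0 <= g n) ->
  (forall K, rsum x (S K) <= rsum y (S K)) ->
  forall K, rsum (fun n => x n * g n) (S K) <= rsum (fun n => y n * g n) (S K).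
Proof.
  intros Hd Hp Hxy.
  assert (Inv : forall K, (rsum y (S K) - rsum x (S K)) * g K <=
             rsum (fun n => y n * g n) (S K) - rsum (fun n => x n * g n) (S K)).
  { induction K; [simpl; lra|].
    change (rsum ?f (S (S K))) with (rsum f (S K) + f (S K)).
    pose proof (Hxy K). pose proof (Hd K). pose proof (Hp (S K)).
    assert ((rsum y (S K) - rsum x (S K)) * g (S K) <= (rsum y (S K) - rsum x (S K)) * g K)
      by (apply Rmult_le_compat_l; lra).
    nra. }
  intros K. pose proof (Inv K). pose proof (Hxy K). pose proof (Hp K).
  assert (0 <= (rsum y (S K) - rsum x (S K)) * g K) by (apply Rmult_le_pos; lra). lra.
Qed.

(* ||hf||^2 <= C0 Sb^2 ||f||^2 when |h| <= Sb on the disk and beta_m <= C0 beta_n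
   for m >= n: the unweighted truncated estimate, reweighted by Abel summation
   against the running minimum of beta. *)
Lemma bounded_function_multiplier beta (hpos : forall n, 0 < beta n) C0
  (HC : forall m n, (n <= m)%nat -> beta m <= C0 * beta n) (h : nat -> C) Sb :
  analytic_disk h ->
  (forall z l, Cmod z < 1 -> value_at h z l -> Cmod l <= Sb) ->
  forall f, in_H2 beta f -> in_H2 beta (cauchy_prod h f) /\
    Series (fun n => Cmod (cauchy_prod h f n) ^ 2 * beta n)
    <= C0 * Sb ^ 2 * Series (fun n => Cmod (f n) ^ 2 * beta n).
Proof.
  intros Ha Hb f Hf.
  set (m := running_min beta).
  assert (HC0 : 0 < C0) by (pose proof (HC 0%nat 0%nat (le_n _)); pose proof (hpos 0%nat); nra).
  assert (Hm : forall n, 0 <= m n) by (intros n; left; apply running_min_pos; auto).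
  assert (HS2 : 0 <= Sb ^ 2) by apply pow2_ge_0.
  apply series_bounded; [intros n; apply Rmult_le_pos; [apply pow2_ge_0| left; auto]|].
  intros K. rewrite sum_n_rsum.
  assert (Ab : rsum (fun n => Cmod (cauchy_prod h f n) ^ 2 * m n) (S K)
               <= rsum (fun n => Sb ^ 2 * Cmod (f n) ^ 2 * m n) (S K)).
  { apply abel_summation; [apply running_min_decr| exact Hm|].
    intros k. rewrite rsum_scal. apply truncated_estimate; auto. }
  apply Rle_trans with (C0 * rsum (fun n => Cmod (cauchy_prod h f n) ^ 2 * m n) (S K)).
  { rewrite <- rsum_scal. apply rsum_le. intros i _.
    pose proof (running_min_ge beta C0 HC i i (le_n _)).
    assert (0 <= Cmod (cauchy_prod h f i) ^ 2) by apply pow2_ge_0. unfold m. nra. }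
  apply Rle_trans with (C0 * Sb ^ 2 * rsum (fun n => Cmod (f n) ^ 2 * beta n) (S K)).
  { rewrite Rmult_assoc. apply Rmult_le_compat_l; [lra|]. eapply Rle_trans; [exact Ab|].
    rewrite <- rsum_scal. apply rsum_le. intros i _.
    pose proof (running_min_le beta i).
    assert (0 <= Sb ^ 2 * Cmod (f i) ^ 2) by (apply Rmult_le_pos; [|apply pow2_ge_0]; auto).
    unfold m. nra. }
  apply Rmult_le_compat_l; [apply Rmult_le_pos; lra|].
  rewrite <- sum_n_rsum. apply partial_sum_le_Series; auto.
  intros n. apply Rmult_le_pos; [apply pow2_ge_0| left; auto].
Qed.

(** * Every multiplier is a bounded operator *)

Definition N2 (beta : nat -> R) (g : nat -> C) (k : nat) : R :=
  rsum (fun n => Cmod (g n) ^ 2 * beta n) (S k).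

Section PartialNorms.

Variable beta : nat -> R.
Hypothesis hpos : forall n, 0 < beta n.

Lemma weighted_term_nonneg (x : nat -> C) n : 0 <= Cmod (x n) ^ 2 * beta n.
Proof. apply Rmult_le_pos; [apply pow2_ge_0| left; auto]. Qed.

Lemma N2_nonneg (x : nat -> C) k : 0 <= N2 beta x k.
Proof. apply rsum_nonneg. intros i. apply weighted_term_nonneg. Qed.

Lemma N2_ext (x y : nat -> C) k : (forall n, (n <= k)%nat -> x n = y n) -> N2 beta x k = N2 beta y k.
Proof. intros H. apply rsum_ext. intros i Hi. rewrite H by lia. reflexivity. Qed.

Lemma N2_supp (x : nat -> C) k K : supp_le x k -> (k <= K)%nat -> N2 beta x K = N2 beta x k.
Proof. intros H HK. apply rsum_zero_tail; [lia|]. intros i Hi. rewrite H, Cmod_0 by lia. ring. Qed.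

Lemma N2_mono (x : nat -> C) k K : (k <= K)%nat -> N2 beta x k <= N2 beta x K.
Proof. intros HK. apply rsum_mono; [apply weighted_term_nonneg| lia]. Qed.

Lemma N2_le_Series (x : nat -> C) k : in_H2 beta x -> N2 beta x k <= Series (fun n => Cmod (x n) ^ 2 * beta n).
Proof. intros Hx. unfold N2. rewrite <- sum_n_rsum. apply partial_sum_le_Series; [apply weighted_term_nonneg| exact Hx]. Qed.

Lemma N2_scal (c : R) x k : N2 beta (fun n => RtoC c * x n)%C k = c ^ 2 * N2 beta x k.
Proof.
  unfold N2. rewrite <- rsum_scal. apply rsum_ext. intros i _.
  rewrite Cmod_mult, Cmod_R, Rpow_mult_distr, pow2_abs. ring.
Qed.

Lemma N2_zero (x : nat -> C) k : N2 beta x k = 0 -> forall n, (n <= k)%nat -> x n = 0%C.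
Proof.
  intros H0 n Hn.
  assert (Cmod (x n) ^ 2 * beta n <= 0)
    by (rewrite <- H0; apply (rsum_term_le (fun n => Cmod (x n) ^ 2 * beta n));
        [apply weighted_term_nonneg| lia]).
  pose proof (hpos n). pose proof (Cmod_ge_0 (x n)).
  assert (Cmod (x n) ^ 2 <= 0) by (apply Rmult_le_reg_r with (beta n); lra).
  apply Cmod_eq_0. simpl in *. nra.
Qed.

Lemma finite_in_H2 (p : nat -> C) a : supp_le p a -> in_H2 beta p.
Proof. intros H. apply (ex_series_finite_R _ a). intros n Hn. rewrite H, Cmod_0 by lia. simpl. ring. Qed.

End PartialNorms.

Section GlidingHump.

Variable beta : nat -> R.
Hypothesis hpos : forall n, 0 < beta n.
Variable h : nat -> C.
Hypothesis Hm : is_multiplier beta h.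

Local Notation e i := (spike i 1).

Lemma cauchy_prod_decompose g a : supp_le g a ->
  forall n, cauchy_prod h g n = csum (fun i => g i * cauchy_prod h (e i) n)%C (S a).
Proof.
  intros Hg n. rewrite (cauchy_prod_ext h g (fun m => csum (fun i => g i * e i m)%C (S a))).
  - rewrite cauchy_prod_csum. apply csum_ext. intros i _. apply cauchy_prod_scal.
  - intros m. destruct (le_lt_dec m a).
    + rewrite (csum_single _ m) by (lia || (intros j _ Hj; unfold spike;
        destruct (Nat.eqb_spec m j); [lia| ring])).
      unfold spike. rewrite Nat.eqb_refl. ring.
    + rewrite Hg by lia. symmetry. apply csum_zero. intros i Hi. unfold spike.
      destruct (Nat.eqb_spec m i); [lia| ring].
Qed.

Lemma multiplier_bounded_low_degree a :
  exists c, 0 <= c /\ forall k g, supp_le g a -> N2 beta (cauchy_prod h g) k <= c * N2 beta g a.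
Proof.
  destruct Hm as [Ha Hmul].
  set (E := fun i => Series (fun n => Cmod (cauchy_prod h (e i) n) ^ 2 * beta n)).
  assert (HeH : forall i, in_H2 beta (cauchy_prod h (e i))) by (intros i; apply Hmul, spike_norm).
  assert (HE : forall i, 0 <= E i)
    by (intros i; apply Series_nonneg; [apply weighted_term_nonneg; auto| apply HeH]).
  exists (INR (S a) * rsum (fun i => E i / beta i) (S a)). split.
  { apply Rmult_le_pos; [apply pos_INR|]. apply rsum_nonneg. intros i.
    apply Rdiv_le_0_compat; auto. }
  intros k g Hg.
  (* Cauchy-Schwarz on the decomposition, coefficient by coefficient. *)
  assert (Pt : forall n, Cmod (cauchy_prod h g n) ^ 2 <=
     INR (S a) * rsum (fun i => Cmod (g i) ^ 2 * Cmod (cauchy_prod h (e i) n) ^ 2) (S a)).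
  { intros n. rewrite (cauchy_prod_decompose g a Hg).
    eapply Rle_trans; [apply pow_incr; split; [apply Cmod_ge_0| apply Cmod_csum_le]|].
    eapply Rle_trans; [apply rsum_sq_le|]. apply Req_le. f_equal. apply rsum_ext. intros i _.
    rewrite Cmod_mult. ring. }
  assert (Hterm : forall i, (i < S a)%nat ->
            Cmod (g i) ^ 2 * N2 beta (cauchy_prod h (e i)) k <= N2 beta g a * (E i / beta i)).
  { intros i Hi.
    assert (Hgi : Cmod (g i) ^ 2 * beta i <= N2 beta g a)
      by (apply (rsum_term_le (fun n => Cmod (g n) ^ 2 * beta n)); [apply weighted_term_nonneg; auto| lia]).
    pose proof (hpos i).
    assert (Hgi' : Cmod (g i) ^ 2 <= N2 beta g a / beta i)
      by (apply Rmult_le_reg_r with (beta i); auto; unfold Rdiv; rewrite Rmult_assoc, Rinv_l; lra).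
    pose proof (N2_le_Series beta hpos _ k (HeH i)). pose proof (N2_nonneg beta hpos (cauchy_prod h (e i)) k).
    apply Rle_trans with (N2 beta g a / beta i * E i); [apply Rmult_le_compat; auto; apply pow2_ge_0|].
    apply Req_le. unfold Rdiv. ring. }
  apply Rle_trans with
    (rsum (fun n => INR (S a) * rsum (fun i => Cmod (g i) ^ 2 * (Cmod (cauchy_prod h (e i) n) ^ 2 * beta n)) (S a)) (S k)).
  { apply rsum_le. intros n _.
    rewrite (rsum_ext _ (fun i => beta n * (Cmod (g i) ^ 2 * Cmod (cauchy_prod h (e i) n) ^ 2)))
      by (intros; ring).
    rewrite rsum_scal. pose proof (Pt n). pose proof (hpos n). nra. }
  rewrite rsum_scal, rsum_switch, Rmult_assoc. apply Rmult_le_compat_l; [apply pos_INR|].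
  rewrite (Rmult_comm (rsum _ _) (N2 _ _ _)), <- rsum_scal. apply rsum_le. intros i Hi.
  rewrite rsum_scal. apply Hterm, Hi.
Qed.

Definition unbounded_on_finite_support : Prop :=
  forall M, 0 < M -> exists k g, supp_le g k /\ M * N2 beta g k < N2 beta (cauchy_prod h g) k.

Definition hump_step (a : nat) (M t : R) (kg : nat * (nat -> C)) : Prop :=
  (forall n, (n <= a)%nat \/ (fst kg < n)%nat -> snd kg n = 0%C) /\
  N2 beta (snd kg) (fst kg) = t /\ M < N2 beta (cauchy_prod h (snd kg)) (fst kg).

Hypothesis Hu : unbounded_on_finite_support.

(* Removing the coefficients of index <= a changes hg only by a bounded amount,
   so unboundedness survives on vectors vanishing on [0, a]. *)
Lemma unbounded_above a M : 0 < M -> exists k (g : nat -> C),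
  (forall n, (n <= a)%nat \/ (k < n)%nat -> g n = 0%C) /\
  M * N2 beta g k < N2 beta (cauchy_prod h g) k.
Proof.
  intros HM.
  destruct (multiplier_bounded_low_degree a) as [c [Hc Hlow]].
  destruct (Hu (2 * c + 2 * M) ltac:(lra)) as [k [g [Hs Hbig]]].
  set (gl := (fun n => if Nat.leb n a then g n else 0%C) : nat -> C).
  set (gh := (fun n => if Nat.leb n a then 0%C else g n) : nat -> C).
  exists k, gh. split.
  { intros n [Hn|Hn]; unfold gh; destruct (Nat.leb_spec n a); try reflexivity; try lia.
    apply Hs; lia. }
  assert (H1 : N2 beta (cauchy_prod h g) k
               <= 2 * N2 beta (cauchy_prod h gl) k + 2 * N2 beta (cauchy_prod h gh) k).
  { unfold N2. rewrite <- !rsum_scal, <- rsum_plus. apply rsum_le. intros n _.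
    rewrite (cauchy_prod_ext h g (fun m => gl m + gh m)%C)
      by (intros m; unfold gl, gh; destruct (Nat.leb m a); ring).
    rewrite cauchy_prod_plus.
    pose proof (Cmod_plus_sq_le (cauchy_prod h gl n) (cauchy_prod h gh n)). pose proof (hpos n). nra. }
  assert (H2 : N2 beta (cauchy_prod h gl) k <= c * N2 beta g k).
  { apply Rle_trans with (c * N2 beta gl a).
    { apply Hlow. intros n Hn. unfold gl. destruct (Nat.leb_spec n a); [lia| reflexivity]. }
    apply Rmult_le_compat_l; auto.
    rewrite (N2_ext beta gl g a) by (intros n Hn; unfold gl; destruct (Nat.leb_spec n a); [reflexivity| lia]).
    rewrite <- (N2_supp beta g k (Nat.max a k)) by (auto || lia). apply N2_mono; auto; lia. }
  assert (H3 : N2 beta gh k <= N2 beta g k).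
  { apply rsum_le. intros n _. apply Rmult_le_compat_r; [left; auto|]. unfold gh.
    destruct (Nat.leb n a); [rewrite Cmod_0; simpl; nra| lra]. }
  pose proof (N2_nonneg beta hpos g k). nra.
Qed.

Lemma hump_step_exists a M t : 0 < t -> exists kg, hump_step a M t kg.
Proof.
  intros Ht.
  set (M' := (Rabs M + 1) / t).
  assert (HM' : 0 < M') by (apply Rdiv_lt_0_compat; auto; pose proof (Rabs_pos M); lra).
  destruct (unbounded_above a M' HM') as [k [g [Hs Hbig]]].
  pose proof (N2_nonneg beta hpos g k) as HG0.
  set (G := N2 beta g k) in *.
  assert (HG : 0 < G).
  { destruct (Req_dec G 0) as [E|E]; [|lra].
    exfalso. assert (Z : forall n, g n = 0%C).
    { intros n. destruct (le_lt_dec n k); [apply (N2_zero beta hpos g k E); auto| apply Hs; lia]. }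
    assert (N2 beta (cauchy_prod h g) k = 0).
    { unfold N2. rewrite <- (Rmult_0_r (INR (S k))), <- rsum_const. apply rsum_ext. intros n _.
      rewrite cauchy_prod_zero, Cmod_0 by auto. ring. }
    rewrite E in Hbig. lra. }
  set (sg := sqrt (t / G)).
  assert (Hsg : sg ^ 2 = t / G) by (apply pow2_sqrt; apply Rlt_le, Rdiv_lt_0_compat; auto).
  exists (k, fun n => (RtoC sg * g n)%C). repeat split; simpl.
  - intros n Hn. rewrite Hs by auto. ring.
  - rewrite N2_scal. fold G. rewrite Hsg. field. lra.
  - rewrite (N2_ext beta _ (fun n => (RtoC sg * cauchy_prod h g n)%C)) by (intros; apply cauchy_prod_scal).
    rewrite N2_scal, Hsg.
    assert (t / G * (M' * G) < t / G * N2 beta (cauchy_prod h g) k)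
      by (apply Rmult_lt_compat_l; [apply Rdiv_lt_0_compat|]; auto).
    replace (t / G * (M' * G)) with (Rabs M + 1) in H by (unfold M'; field; lra).
    pose proof (Rle_abs M). lra.
Qed.

End GlidingHump.

Section HumpSequence.

Variable beta : nat -> R.
Hypothesis hpos : forall n, 0 < beta n.
Variable h : nat -> C.
Hypothesis Hm : is_multiplier beta h.
Hypothesis Hu : unbounded_on_finite_support beta h.

Definition choose_step (a : nat) (M t : R) : nat * (nat -> C) :=
  epsilon (inhabits ((0%nat, fun _ => RtoC 0) : nat * (nat -> C))) (hump_step beta h a M t).

Definition mult_sq_norm (p : nat -> C) : R := Series (fun n => Cmod (cauchy_prod h p n) ^ 2 * beta n).

(* Stage J: a finitely supported vector p_J, supported in [0, a_J].  Stage J+1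
   adds a hump of squared norm 2^-J beyond a_J whose image under M_h has
   squared norm larger than 2 (||h p_J||^2 + J). *)
Definition hump_next (J : nat) (ap : nat * (nat -> C)) : nat * (nat -> C) :=
  let kg := choose_step (fst ap) (2 * (mult_sq_norm (snd ap) + INR J)) ((/ 2) ^ J) in
  (Nat.max (fst kg) (S (fst ap)), fun n => (snd ap n + snd kg n)%C).

Fixpoint hump_seq (J : nat) : nat * (nat -> C) :=
  match J with O => (O, fun _ => RtoC 0) | S J => hump_next J (hump_seq J) end.

Local Notation a J := (fst (hump_seq J)).
Local Notation p J := (snd (hump_seq J)).
Local Notation hump J := (choose_step (a J) (2 * (mult_sq_norm (p J) + INR J)) ((/ 2) ^ J)).

Lemma hump_spec J : hump_step beta h (a J) (2 * (mult_sq_norm (p J) + INR J)) ((/ 2) ^ J) (hump J).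
Proof. unfold choose_step. apply epsilon_spec, (hump_step_exists beta hpos h Hm Hu). apply pow_lt. lra. Qed.

Lemma hump_seq_supp J : supp_le (p J) (a J).
Proof.
  induction J; intros n Hn; [reflexivity|]. simpl in Hn |- *.
  rewrite IHJ by lia. rewrite (proj1 (hump_spec J)) by lia. ring.
Qed.

Lemma hump_seq_index_ge J : (J <= a J)%nat.
Proof. induction J; simpl; lia. Qed.

Lemma hump_seq_index_mono J J' : (J <= J')%nat -> (a J <= a J')%nat.
Proof. induction 1; simpl; lia. Qed.

(* The humps are disjointly supported: N2(p_J) = 2 - 2^(1-J). *)
Lemma hump_seq_norm J : N2 beta (p J) (a J) = 2 - 2 * (/ 2) ^ J.
Proof.
  induction J; [unfold N2; simpl; rewrite Cmod_0; field|].
  destruct (hump_spec J) as [S1 [S2 _]].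
  change (N2 beta (p (S J)) (a (S J))) with
    (N2 beta (fun n => (p J n + snd (hump J) n)%C) (Nat.max (fst (hump J)) (S (a J)))).
  unfold N2.
  rewrite (rsum_ext _ (fun n => Cmod (p J n) ^ 2 * beta n + Cmod (snd (hump J) n) ^ 2 * beta n)).
  2:{ intros n _. destruct (le_lt_dec n (a J)).
      - rewrite (S1 n (or_introl l)), Cplus_0_r, Cmod_0. simpl. ring.
      - rewrite (hump_seq_supp J n l), Cplus_0_l, Cmod_0. simpl. ring. }
  rewrite rsum_plus. fold (N2 beta (p J) (Nat.max (fst (hump J)) (S (a J)))).
  fold (N2 beta (snd (hump J)) (Nat.max (fst (hump J)) (S (a J)))).
  rewrite (N2_supp beta (p J) (a J)) by (apply hump_seq_supp || lia).
  rewrite (N2_supp beta (snd (hump J)) (fst (hump J))) by ((intros n Hn; apply S1; lia) || lia).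
  rewrite IHJ, S2. simpl. field.
Qed.

Lemma hump_seq_stable J J' : (J <= J')%nat -> forall n, (n <= a J)%nat -> p J' n = p J n.
Proof.
  induction 1; intros n Hn; [reflexivity|]. simpl.
  rewrite IHle by auto. rewrite (proj1 (hump_spec m)); [ring|].
  left. pose proof (hump_seq_index_mono J m H). lia.
Qed.

(* The limit vector f = lim p_J, which lies in H^2(beta) with squared norm <= 2. *)
Definition hump_limit : nat -> C := fun n => p n n.

Lemma hump_limit_agrees J n : (n <= a J)%nat -> hump_limit n = p J n.
Proof.
  intros Hn. unfold hump_limit. destruct (le_lt_dec J n).
  - apply hump_seq_stable; auto.
  - symmetry. apply hump_seq_stable; [lia| apply hump_seq_index_ge].
Qed.

Lemma hump_limit_in_H2 : in_H2 beta hump_limit.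
Proof.
  apply (series_bounded _ 2); [apply weighted_term_nonneg; auto|]. intros K.
  rewrite sum_n_rsum. fold (N2 beta hump_limit K).
  rewrite (N2_ext beta hump_limit (p K))
    by (intros n Hn; apply hump_limit_agrees; pose proof (hump_seq_index_ge K); lia).
  eapply Rle_trans; [apply (N2_mono beta hpos (p K) K (a K) (hump_seq_index_ge K))|].
  rewrite hump_seq_norm. assert (0 < (/ 2) ^ K) by (apply pow_lt; lra). lra.
Qed.

(* Contradiction: at stage J > ||h f||^2, the hump g_J satisfies
   N2(h g_J) <= 2 N2(h p_(J+1)) + 2 N2(h p_J) <= 2 ||hf||^2 + 2 ||h p_J||^2,
   against N2(h g_J) > 2 (||h p_J||^2 + J). *)
Lemma multiplier_not_unbounded : False.
Proof.
  destruct Hm as [Ha Hmul].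
  set (f := hump_limit).
  pose proof (Hmul f hump_limit_in_H2) as Hhf.
  set (L := Series (fun n => Cmod (cauchy_prod h f n) ^ 2 * beta n)).
  assert (HL : 0 <= L) by (apply Series_nonneg; [apply weighted_term_nonneg; auto| exact Hhf]).
  destruct (nfloor_ex L HL) as [J0 [_ HJ0]].
  set (J := S J0).
  assert (HJ : L < INR J) by (unfold J; rewrite S_INR; lra).
  destruct (hump_spec J) as [S1 [_ S3]].
  set (k := fst (hump J)) in *. set (g := snd (hump J)) in *.
  assert (Hk : (k <= a (S J))%nat) by (change (a (S J)) with (Nat.max k (S (a J))); lia).
  assert (E1 : N2 beta (cauchy_prod h f) k = N2 beta (cauchy_prod h (fun n => p J n + g n)%C) k).
  { apply N2_ext. intros n Hn. apply (cauchy_prod_local h f _ (a (S J))); [|lia].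
    intros m Hm'. unfold f. rewrite (hump_limit_agrees (S J) m Hm'). reflexivity. }
  assert (HpJ : in_H2 beta (cauchy_prod h (p J)))
    by (apply Hmul, (finite_in_H2 beta _ (a J)), hump_seq_supp).
  assert (E2 : N2 beta (cauchy_prod h (p J)) k <= mult_sq_norm (p J)) by (apply N2_le_Series; auto).
  assert (E3 : N2 beta (cauchy_prod h g) k <= 2 * N2 beta (cauchy_prod h (fun n => p J n + g n)%C) k
                 + 2 * N2 beta (cauchy_prod h (p J)) k).
  { unfold N2. rewrite <- !rsum_scal, <- rsum_plus. apply rsum_le. intros n _.
    rewrite cauchy_prod_plus.
    pose proof (Cmod_plus_sq_le (cauchy_prod h (p J) n + cauchy_prod h g n)%C (- cauchy_prod h (p J) n)%C).
    replace (cauchy_prod h (p J) n + cauchy_prod h g n + - cauchy_prod h (p J) n)%C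
      with (cauchy_prod h g n) in H by ring.
    rewrite Cmod_opp in H. pose proof (hpos n). nra. }
  assert (E4 : N2 beta (cauchy_prod h f) k <= L) by (apply N2_le_Series; auto).
  lra.
Qed.

End HumpSequence.

(* Every multiplier is bounded: otherwise M_h would be unbounded already on
   finitely supported vectors, which the gliding hump excludes. *)
Lemma multiplier_bounded beta (hpos : forall n, 0 < beta n) h : is_multiplier beta h ->
  exists M, 0 < M /\ forall f, in_H2 beta f ->
    Series (fun n => Cmod (cauchy_prod h f n) ^ 2 * beta n) <= M * Series (fun n => Cmod (f n) ^ 2 * beta n).
Proof.
  intros Hm.
  destruct (classic (exists M, 0 < M /\ forall k g, supp_le g k ->
      N2 beta (cauchy_prod h g) k <= M * N2 beta g k)) as [[M [HM H]]|Hn].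
  - exists M. split; auto. intros f Hf.
    apply series_bounded; [apply weighted_term_nonneg; auto|]. intros K.
    rewrite sum_n_rsum. fold (N2 beta (cauchy_prod h f) K).
    rewrite (N2_ext beta _ (cauchy_prod h (truncate K f)))
      by (intros n Hn; apply (cauchy_prod_local h f _ K); auto; intros; rewrite truncate_low; auto).
    eapply Rle_trans; [apply H, truncate_supp|].
    apply Rmult_le_compat_l; [lra|].
    rewrite <- (N2_ext beta f (truncate K f) K) by (intros; rewrite truncate_low; auto).
    apply N2_le_Series; auto.
  - exfalso. apply (multiplier_not_unbounded beta hpos h Hm).
    intros M HM. apply NNPP. intros Hc. apply Hn. exists M. split; auto.
    intros k g Hs. apply Rnot_lt_le. intros Hlt. apply Hc. exists k, g. auto.
Qed.

Lemma H2_norm_le_1 beta (hpos : forall n, 0 < beta n) f :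
  in_H2 beta f -> H2_norm beta f <= 1 -> Series (fun n => Cmod (f n) ^ 2 * beta n) <= 1.
Proof.
  intros Hin Hn. unfold H2_norm in Hn.
  assert (0 <= Series (fun n => Cmod (f n) ^ 2 * beta n))
    by (apply Series_nonneg; [apply weighted_term_nonneg|]; auto).
  rewrite <- (pow2_sqrt (Series _)), <- (pow1 2) by auto.
  apply pow_incr. split; [apply sqrt_pos| exact Hn].
Qed.

Lemma mult_norm_le beta (hpos : forall n, 0 < beta n) h K : 0 <= K ->
  (forall f, in_H2 beta f ->
     Series (fun n => Cmod (cauchy_prod h f n) ^ 2 * beta n) <= K ^ 2 * Series (fun n => Cmod (f n) ^ 2 * beta n)) ->
  Rbar_le (mult_norm beta h) K.
Proof.
  intros HK Hf. apply (Lub_Rbar_correct _). intros x [f [Hin [Hn ->]]]. simpl.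
  pose proof (H2_norm_le_1 beta hpos f Hin Hn).
  unfold H2_norm. rewrite <- (sqrt_pow2 K) by auto. apply sqrt_le_1_alt.
  eapply Rle_trans; [apply Hf, Hin|].
  rewrite <- (Rmult_1_r (K ^ 2)) at 2. apply Rmult_le_compat_l; [apply pow2_ge_0| auto].
Qed.

(* A multiplier is bounded by its norm: the pointwise bound of
   multiplier_pointwise_bound holds for every M > ||M_h||. *)
Lemma sup_norm_le_mult_norm beta (hpos : forall n, 0 < beta n)
  (hliminf : Rbar_le (Finite 1) (LimInf_seq (fun n => Rpower (beta n) (/ INR n)))) h :
  is_multiplier beta h -> Rbar_le (sup_norm h) (mult_norm beta h).
Proof.
  intros [Ha Hmul].
  destruct (spike_norm beta 0 0) as [H0in H0s].
  assert (H0 : Rbar_le (H2_norm beta (cauchy_prod h (spike 0 0))) (mult_norm beta h)).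
  { apply mult_norm_ub; auto. unfold H2_norm. rewrite H0s.
    replace (0 ^ 2 * beta 0%nat) with 0 by ring. rewrite sqrt_0. lra. }
  destruct (mult_norm beta h) as [M0| |] eqn:EM; [| destruct (sup_norm h); exact I| contradiction].
  apply (Lub_Rbar_correct _). intros x [z [l [Hz [Hl ->]]]]. simpl.
  apply Rnot_lt_le. intros Hlt.
  set (M := (M0 + Cmod l) / 2).
  assert (HM0 : 0 <= M0) by (eapply Rle_trans; [apply sqrt_pos| exact H0]).
  assert (Cmod l <= M); [|unfold M in *; lra].
  refine (multiplier_pointwise_bound beta hpos hliminf h M Ha ltac:(unfold M; lra) _ z l Hz Hl).
  intros f Hin Hs1. split; [apply Hmul; auto|].
  assert (Hf : Rbar_le (H2_norm beta (cauchy_prod h f)) (mult_norm beta h)).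
  { apply mult_norm_ub; auto. unfold H2_norm. rewrite <- sqrt_1. apply sqrt_le_1_alt. exact Hs1. }
  rewrite EM in Hf. simpl in Hf. unfold H2_norm in Hf.
  assert (0 <= Series (fun n => Cmod (cauchy_prod h f n) ^ 2 * beta n))
    by (apply Series_nonneg; [apply weighted_term_nonneg| apply Hmul]; auto).
  rewrite <- (pow2_sqrt (Series _)) by auto. apply pow_incr. split; [apply sqrt_pos| unfold M; lra].
Qed.

Lemma sup_norm_finite h : in_Hinf h -> exists S, sup_norm h = Finite S /\ 0 <= S /\
  forall z l, Cmod z < 1 -> value_at h z l -> Cmod l <= S.
Proof.
  intros [Ha [M HM]].
  destruct (Ha 0%C) as [l0 Hl0]; [rewrite Cmod_0; lra|].
  unfold sup_norm.
  set (E := fun x => exists z l, Cmod z < 1 /\ value_at h z l /\ x = Cmod l).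
  destruct (Lub_Rbar_correct E) as [Hub Hlst].
  assert (E0 : E (Cmod l0)) by (exists 0%C, l0; rewrite Cmod_0; repeat split; auto; lra).
  assert (Hup : Rbar_le (Lub_Rbar E) M)
    by (apply Hlst; intros x [z [l [Hz [Hl ->]]]]; simpl; eauto).
  pose proof (Hub _ E0) as Hlo.
  destruct (Lub_Rbar E) as [S| |]; simpl in Hup, Hlo; try contradiction.
  exists S. split; [reflexivity|]. split; [pose proof (Cmod_ge_0 l0); lra|].
  intros z l Hz Hl. apply (Hub (Cmod l)). exists z, l. auto.
Qed.

Lemma multiplier_in_Hinf beta (hpos : forall n, 0 < beta n)
  (hliminf : Rbar_le (Finite 1) (LimInf_seq (fun n => Rpower (beta n) (/ INR n)))) h :
  is_multiplier beta h -> in_Hinf h.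
Proof.
  intros Hm. destruct (multiplier_bounded beta hpos h Hm) as [M [HM HB]].
  split; [apply Hm|]. exists (sqrt M).
  apply (multiplier_pointwise_bound beta hpos hliminf h (sqrt M) (proj1 Hm) (sqrt_lt_R0 _ HM)).
  intros f Hf H1. split; [apply Hm; auto|].
  rewrite pow2_sqrt by lra. eapply Rle_trans; [apply HB; auto| nra].
Qed.

Lemma Hinf_multiplier beta (hpos : forall n, 0 < beta n) C0
  (HC : forall m n, (n <= m)%nat -> beta m <= C0 * beta n) h :
  in_Hinf h -> is_multiplier beta h /\ Rbar_le (mult_norm beta h) (Rbar_mult (Finite (sqrt C0)) (sup_norm h)).
Proof.
  intros Hi. destruct (sup_norm_finite h Hi) as [S [ES [HS Hb]]].
  pose proof (bounded_function_multiplier beta hpos C0 HC h S (proj1 Hi) Hb) as Hf.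
  assert (HC0 : 0 <= C0) by (pose proof (HC 0%nat 0%nat (le_n _)); pose proof (hpos 0%nat); nra).
  split; [split; [apply Hi| intros f H; apply Hf, H]|].
  rewrite ES. simpl. apply mult_norm_le; auto; [apply Rmult_le_pos; auto; apply sqrt_pos|].
  intros f H. rewrite Rpow_mult_distr, pow2_sqrt by auto. apply Hf, H.
Qed.

Theorem mainTheorem16 (beta : nat -> R)
  (hpos : forall n, 0 < beta n)
  (hliminf : Rbar_le (Finite 1) (LimInf_seq (fun n => Rpower (beta n) (/ INR n)))) :
  ((forall h : nat -> C, is_multiplier beta h <-> in_Hinf h) /\
   exists Cst : R, 0 < Cst /\
     forall h : nat -> C, in_Hinf h ->
       Rbar_le (sup_norm h) (mult_norm beta h) /\
       Rbar_le (mult_norm beta h) (Rbar_mult (Finite Cst) (sup_norm h)))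
  <-> ess_decreasing beta.
Proof.
  split.
  - intros [_ [Cst [HC H]]].
    apply (ess_decreasing_of_norm_bound beta hpos Cst HC). intros h Hh. apply H, Hh.
  - intros [C0 [HC1 HC]]. split.
    + intros h. split; [apply multiplier_in_Hinf; auto|].
      intros Hh. exact (proj1 (Hinf_multiplier beta hpos C0 HC h Hh)).
    + exists (sqrt C0). split; [apply sqrt_lt_R0; lra|]. intros h Hh.
      destruct (Hinf_multiplier beta hpos C0 HC h Hh) as [Hm Hle].
      split; [apply sup_norm_le_mult_norm|]; auto.
Qed.
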